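(* For every integer $k\ge1$, \begin{align*} \sum_{n=1}^\infty\frac{H_n\,P_k(H_n,\dots,H_n^{(k)})}{(n+1)^2}&=(k+2)\zeta(k+3)-\zeta(k+2,1),\\ \frac12\sum_{n=1}^\infty\frac{\big(H_n^2+H_n^{(2)}\big)P_k(H_n,\dots,H_n^{(k)})}{(n+1)^2}&=\binom{k+3}{2}\zeta(k+4)-(k+2)\zeta(k+3,1)-\zeta(k+2,2). \end{align*}
   Context: $H_n^{(r)}=\sum_{t=1}^n t^{-r}$, $H_n=H_n^{(1)}$. For $n\ge1$, $P_n(y_1,\dots,y_n)=\sum_{m_1+2m_2+\cdots=n}\frac{(-1)^{m_2+m_4+\cdots}}{m_1!m_2!\cdots}\prod_{i\ge1}(y_i/i)^{m_i}$. Multiple zeta values: $\zeta(a_1,a_2)=\sum_{n_1>n_2\ge1}n_1^{-a_1}n_2^{-a_2}$ for $a_1\ge2$, $a_2\ge1$; $\zeta$ of one argument is the Riemann zeta function. *)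

From Stdlib Require Import Reals Lra Lia Arith.
Open Scope R_scope.

Fixpoint Hr (r n : nat) : R :=
  match n with
  | O => 0
  | S m => Hr r m + / (INR (S m)) ^ r
  end.

(* Partition sum: Psum y j n = sum over (m_1,...,m_j) with
   m_1 + 2 m_2 + ... + j m_j = n of
   prod_{i<=j} (-1)^{[i even] m_i} / m_i! * (y_i / i)^{m_i}. *)
Fixpoint Psum (y : nat -> R) (j n : nat) : R :=
  match j with
  | O => if Nat.eqb n 0 then 1 else 0
  | S j' =>
      sum_f_R0 (fun m =>
        (if Nat.even (S j') then (-1) ^ m else 1)
        / INR (fact m) * (y (S j') / INR (S j')) ^ m
        * Psum y j' (n - m * S j')%nat) (n / S j')
  end.

(* P_n(y_1,...,y_n): sum over all partitions m_1 + 2 m_2 + ... = n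
   (only i <= n can have m_i > 0). *)
Definition P (n : nat) (y : nat -> R) : R := Psum y n n.

Definition is_zeta1 (s : nat) (z : R) : Prop :=
  infinite_sum (fun n => / (INR (S n)) ^ s) z.

(* z = zeta(a1,a2) = sum_{n1>n2>=1} n1^{-a1} n2^{-a2}, summed as
   sum_{n1>=1} n1^{-a1} * (sum_{n2=1}^{n1-1} n2^{-a2}) (positive terms). *)
Definition is_zeta2 (a1 a2 : nat) (z : R) : Prop :=
  infinite_sum (fun n => / (INR (S n)) ^ a1 * Hr a2 n) z.

(* P_k(H_n, ..., H_n^(k)) is the elementary symmetric function e_k(1, 1/2, ..., 1/n) (Newton's
   identities), i.e. the coefficient of x^k in prod_{j<=n} (1 + x/j).  The two sums are therefore
   the coefficients of x^k y and x^k y^2 in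
     F(x, y) = sum_n prod_{j<=n} (j + x)/(j - y) / (n + 1)^2.
   Telescoping in the shift i of the products prod_{j<=n} (j + x)/(j + i - y) evaluates
     F(x, y) = sum_n (1 - y sum_{t<=n} 1/(t - y)) / ((n + 1 - y) (n + 1 - y - x))
   for 0 <= x, y <= 1/4.  Expanding this right-hand side in x and then in y produces the zeta
   values.  Coefficients may be compared termwise because on both sides the remainders of the
   truncated expansions are dominated by summable sequences, uniformly in x and y. *)

From Stdlib Require Import Reals Lra Lia Arith.
From Coquelicot Require Import Coquelicot.
(* Re-imported so that [C] is the binomial coefficient again, not Coquelicot's complex numbers. *)
From Stdlib Require Import Binomial.
Open Scope R_scope.

Fixpoint sumN (f : nat -> R) (n : nat) : R :=
  match n with O => 0 | S n' => sumN f n' + f n' end.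

Lemma sumN_S f n : sumN f (S n) = sumN f n + f n.
Proof. reflexivity. Qed.

Lemma sumN_f_R0 f n : sumN f (S n) = sum_f_R0 f n.
Proof. induction n as [|n IH]; simpl in *; [ring | rewrite <- IH; simpl; ring]. Qed.

Lemma sumN_ext f g n : (forall i, (i < n)%nat -> f i = g i) -> sumN f n = sumN g n.
Proof. induction n; simpl; intros H; [reflexivity |]. rewrite IHn, H; auto. Qed.

Lemma sumN_plus f g n : sumN (fun i => f i + g i) n = sumN f n + sumN g n.
Proof. induction n; simpl; [ring | rewrite IHn; ring]. Qed.

Lemma sumN_minus f g n : sumN (fun i => f i - g i) n = sumN f n - sumN g n.
Proof. induction n; simpl; [ring | rewrite IHn; ring]. Qed.

Lemma sumN_scal c f n : sumN (fun i => c * f i) n = c * sumN f n.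
Proof. induction n; simpl; [ring | rewrite IHn; ring]. Qed.

Lemma sumN_le f g n : (forall i, (i < n)%nat -> f i <= g i) -> sumN f n <= sumN g n.
Proof.
  induction n; simpl; intros H; [lra |].
  assert (sumN f n <= sumN g n) by (apply IHn; intros; apply H; lia).
  pose proof (H n (Nat.lt_succ_diag_r n)). lra.
Qed.

Lemma sumN_nonneg f n : (forall i, (i < n)%nat -> 0 <= f i) -> 0 <= sumN f n.
Proof.
  intros H. replace 0 with (sumN (fun _ => 0) n) by (induction n; simpl; [ | rewrite IHn ]; try ring;
    intros; apply H; lia).
  now apply sumN_le.
Qed.

Lemma sumN_shift f n : sumN f (S n) = f O + sumN (fun i => f (S i)) n.
Proof. induction n; simpl in *; [ring | rewrite IHn; ring]. Qed.

Lemma sumN_add f a b : sumN f (a + b) = sumN f a + sumN (fun i => f (a + i)%nat) b.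
Proof. induction b. rewrite Nat.add_0_r; simpl; ring. rewrite Nat.add_succ_r, !sumN_S, IHb. ring. Qed.

Lemma sumN_zero f n : (forall i, (i < n)%nat -> f i = 0) -> sumN f n = 0.
Proof. intros H; induction n; simpl; auto. rewrite IHn, H; [ring | lia | intros; apply H; lia]. Qed.

Lemma sumN_swap (f : nat -> nat -> R) n m :
  sumN (fun i => sumN (fun j => f i j) m) n = sumN (fun j => sumN (fun i => f i j) n) m.
Proof.
  induction n; simpl.
  - induction m; simpl; auto; rewrite <- IHm; ring.
  - rewrite IHn, <- sumN_plus. reflexivity.
Qed.

Lemma sumN_abs f n : Rabs (sumN f n) <= sumN (fun i => Rabs (f i)) n.
Proof.
  induction n; simpl. rewrite Rabs_R0; lra.
  eapply Rle_trans; [apply Rabs_triang | lra].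
Qed.

Lemma sumN_trunc_tail f n k :
  (n <= k)%nat -> (forall i, (n <= i < k)%nat -> f i = 0) -> sumN f k = sumN f n.
Proof.
  intros H Hz. induction k. assert (n = 0%nat) by lia. subst; auto.
  destruct (Nat.eq_dec n (S k)). subst; auto.
  rewrite sumN_S, IHk, Hz; [ring | lia | lia | intros; apply Hz; lia].
Qed.

Lemma sumN_trunc_if (P : nat -> bool) f L L' : (L' <= L)%nat ->
  (forall m, (m < L)%nat -> (P m = true <-> (m < L')%nat)) ->
  sumN (fun m => if P m then f m else 0) L = sumN f L'.
Proof.
  intros H HP. rewrite (sumN_trunc_tail _ L' L); auto.
  - apply sumN_ext. intros i hi. destruct (P i) eqn:E; auto.
    assert (P i = true) by (apply (proj2 (HP i ltac:(lia))); lia). congruence.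
  - intros i hi. destruct (P i) eqn:E; auto. apply HP in E; lia.
Qed.

Lemma sumN_term_le f K i :
  (forall j, (j < K)%nat -> 0 <= f j) -> (i < K)%nat -> f i <= sumN f K.
Proof.
  intros H hi. replace K with (S i + (K - S i))%nat by lia.
  rewrite sumN_add, sumN_S.
  assert (0 <= sumN f i) by (apply sumN_nonneg; intros; apply H; lia).
  assert (0 <= sumN (fun j => f (S i + j)%nat) (K - S i)) by (apply sumN_nonneg; intros; apply H; lia).
  lra.
Qed.

Lemma sumN_alt_telescope f m :
  sumN (fun i => (-1) ^ i * (f i + f (S i))) m = f O - (-1) ^ m * f m.
Proof. induction m; simpl sumN. simpl; ring. rewrite IHm. simpl. ring. Qed.

Lemma is_series_sumN a l : is_series a l <-> is_lim_seq (sumN a) l.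
Proof.
  rewrite is_series_Reals. split; intros H.
  - apply is_lim_seq_incr_1, is_lim_seq_Reals.
    intros e he. destruct (H e he) as [N HN]. exists N. intros n hn.
    rewrite sumN_f_R0. now apply HN.
  - apply is_lim_seq_incr_1, is_lim_seq_Reals in H.
    intros e he. destruct (H e he) as [N HN]. exists N. intros n hn.
    rewrite <- sumN_f_R0. now apply HN.
Qed.

Lemma is_series_plusR a b la lb : is_series a la -> is_series b lb ->
  is_series (fun n => a n + b n) (la + lb).
Proof. exact (@is_series_plus _ R_NormedModule a b la lb). Qed.

Lemma is_series_minusR a b la lb : is_series a la -> is_series b lb ->
  is_series (fun n => a n - b n) (la - lb).
Proof. exact (@is_series_minus _ R_NormedModule a b la lb). Qed.

Lemma is_series_scalR c a l : is_series a l -> is_series (fun n => c * a n) (c * l).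
Proof. exact (@is_series_scal_l _ R_NormedModule c a l). Qed.

Lemma is_series_extR (a b : nat -> R) (l : R) :
  (forall n, a n = b n) -> is_series a l -> is_series b l.
Proof. exact (@is_series_ext _ R_NormedModule a b l). Qed.

Lemma ex_series_scalR (a : nat -> R) c : ex_series a -> ex_series (fun n => c * a n).
Proof. intros [l H]. exists (c * l). now apply is_series_scalR. Qed.

Lemma ex_series_divR (a : nat -> R) c : ex_series a -> ex_series (fun n => a n / c).
Proof. intros [l H]. exists (l * / c). exact (is_series_scal_r (/ c) a l H). Qed.

Lemma is_series_sumN_fin K (f : nat -> nat -> R) (L : nat -> R) :
  (forall i, (i < K)%nat -> is_series (f i) (L i)) ->
  is_series (fun n => sumN (fun i => f i n) K) (sumN L K).
Proof.
  induction K; intros H; simpl.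
  - apply is_series_sumN, (is_lim_seq_ext (fun _ => 0)), is_lim_seq_const.
    intros n; induction n; simpl; auto; rewrite <- IHn; ring.
  - apply is_series_plusR; [apply IHK; intros; apply H; lia | apply H; lia].
Qed.

Lemma is_series_drop0 (a : nat -> R) l : a O = 0 -> is_series a l -> is_series (fun m => a (S m)) l.
Proof.
  intros h0 H. apply (is_series_incr_1 a l). rewrite h0.
  change (plus l 0) with (l + 0). now rewrite Rplus_0_r.
Qed.

Lemma ex_series_bounded a M : (forall n, 0 <= a n) -> (forall n, sumN a n <= M) -> ex_series a.
Proof.
  intros Ha HM.
  assert (G : Un_growing (sumN a)) by (intros n; simpl; specialize (Ha n); lra).
  destruct (growing_cv _ G) as [l Hl]. { exists M. intros x [n ->]. apply HM. }
  exists l. apply is_series_sumN. now apply is_lim_seq_Reals.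
Qed.

Lemma Series_sumN_le a M : (forall n, 0 <= a n) -> ex_series a ->
  (forall n, sumN a n <= M) -> Series a <= M.
Proof.
  intros Ha [l Hl] HM. rewrite (is_series_unique a l Hl).
  apply is_series_sumN in Hl.
  assert (H : Rbar_le l M) by (apply (is_lim_seq_le (sumN a) (fun _ => M)); auto using is_lim_seq_const).
  exact H.
Qed.

Lemma Series_nonneg a : (forall n, 0 <= a n) -> ex_series a -> 0 <= Series a.
Proof.
  intros H [l Hl]. rewrite (is_series_unique a l Hl). apply is_series_sumN in Hl.
  assert (Hle : Rbar_le 0 l).
  { apply (is_lim_seq_le (fun _ => 0) (sumN a)); auto using is_lim_seq_const.
    intros; apply sumN_nonneg; auto. }
  exact Hle.
Qed.

Lemma ex_series_Rabs_le (a b : nat -> R) :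
  (forall n, Rabs (a n) <= b n) -> ex_series b -> ex_series a.
Proof. intros H Hb. apply (ex_series_le a b); auto. Qed.

Lemma Series_Rabs_le a b : (forall n, Rabs (a n) <= b n) -> ex_series b -> Rabs (Series a) <= Series b.
Proof.
  intros H Hb. assert (ex_series (fun n => Rabs (a n))).
  { apply (ex_series_Rabs_le _ b); auto. intros; rewrite Rabs_Rabsolu; auto. }
  eapply Rle_trans. apply Series_Rabs; auto. apply Series_le; auto.
  intros; split; auto; apply Rabs_pos.
Qed.

Lemma ex_series_of_relation (a c b : nat -> R) al be :
  al <> 0 -> (forall n, al * a n - be * c n = b n) -> ex_series b -> ex_series c -> ex_series a.
Proof.
  intros hal H [lb Hb] [lc Hc]. exists (/ al * (lb + be * lc)).
  apply (is_series_extR (fun n => / al * (b n + be * c n))).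
  - intros n. rewrite <- H. field. auto.
  - apply is_series_scalR, is_series_plusR, is_series_scalR; auto.
Qed.

Lemma Series_of_relation (a c b : nat -> R) al be :
  (forall n, al * a n - be * c n = b n) -> ex_series a -> ex_series c ->
  al * Series a - be * Series c = Series b.
Proof.
  intros H Ha Hc. symmetry. apply is_series_unique.
  apply (is_series_extR (fun n => al * a n - be * c n)); auto.
  apply is_series_minusR; apply is_series_scalR, Series_correct; auto.
Qed.

Lemma is_lim_seq_0_dominated (v w : nat -> R) :
  (forall n, Rabs (v n) <= w n) -> is_lim_seq w 0 -> is_lim_seq v 0.
Proof.
  intros H Hw. apply is_lim_seq_abs_0.
  apply (is_lim_seq_le_le (fun _ => 0) _ w); auto using is_lim_seq_const.
  intros n; split; [apply Rabs_pos | apply H].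
Qed.

Lemma is_lim_seq_div_INR_S (c : R) : is_lim_seq (fun n => c / INR (S n)) 0.
Proof.
  replace (Finite 0) with (Rbar_mult c (Rbar_inv p_infty)) by (simpl; f_equal; ring).
  apply is_lim_seq_scal_l, is_lim_seq_inv; [| discriminate].
  exact (proj1 (is_lim_seq_incr_1 INR p_infty) is_lim_seq_INR).
Qed.

Lemma INR_S_pos n : 0 < INR (S n).
Proof. apply lt_0_INR; lia. Qed.

Lemma INR_S_ge1 n : 1 <= INR (S n).
Proof. rewrite S_INR; pose proof (pos_INR n); lra. Qed.

Lemma inv_INR_S_pow_pos n p : 0 < / INR (S n) ^ p.
Proof. apply Rinv_0_lt_compat, pow_lt, INR_S_pos. Qed.

Lemma Hr_S r n : Hr r (S n) = Hr r n + / INR (S n) ^ r.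
Proof. reflexivity. Qed.

Lemma Hr_sumN r n : Hr r n = sumN (fun i => / INR (S i) ^ r) n.
Proof. induction n; simpl; auto. rewrite IHn; reflexivity. Qed.

Lemma Hr_nonneg r n : 0 <= Hr r n.
Proof. rewrite Hr_sumN. apply sumN_nonneg. intros; apply Rlt_le, inv_INR_S_pow_pos. Qed.

Lemma sumN_inv_sq_le N : sumN (fun n => / INR (S n) ^ 2) (S N) <= 2 - / INR (S N).
Proof.
  induction N.
  - simpl. lra.
  - rewrite sumN_S.
    assert (/ INR (S (S N)) ^ 2 <= / INR (S N) - / INR (S (S N))).
    { rewrite (S_INR (S N)). pose proof (INR_S_pos N).
      replace (/ INR (S N) - / (INR (S N) + 1)) with (/ (INR (S N) * (INR (S N) + 1))) by (field; lra).
      apply Rinv_le_contravar; nra. }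
    lra.
Qed.

Lemma H2_le2 n : Hr 2 n <= 2.
Proof.
  rewrite Hr_sumN. destruct n; [simpl; lra |].
  pose proof (sumN_inv_sq_le n). pose proof (Rinv_0_lt_compat _ (INR_S_pos n)). lra.
Qed.

Lemma ex_series_inv_sq : ex_series (fun n => / INR (S n) ^ 2).
Proof.
  apply (ex_series_bounded _ 2); [intros; apply Rlt_le, inv_INR_S_pow_pos |].
  intros N. rewrite <- Hr_sumN. apply H2_le2.
Qed.

Lemma ex_series_inv_sq_2 : ex_series (fun n => 2 * / INR (S n) ^ 2).
Proof. apply ex_series_scalR, ex_series_inv_sq. Qed.

Lemma sumN_harmonic_telescope N :
  sumN (fun n => Hr 1 n / (INR (S n) * INR (S (S n)))) N = 1 - (Hr 1 N + 1) / INR (S N).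
Proof.
  induction N. simpl. field.
  rewrite sumN_S, IHN, Hr_S, pow_1, (S_INR (S N)). pose proof (INR_S_pos N). field. lra.
Qed.

Definition hmaj (n : nat) : R := (1 + Hr 1 n) / INR (S n) ^ 2.

Lemma ex_series_hmaj : ex_series hmaj.
Proof.
  set (w n := Hr 1 n / (INR (S n) * INR (S (S n)))).
  assert (Hw : ex_series w).
  { apply (ex_series_bounded _ 1).
    - intros n. unfold w. pose proof (Hr_nonneg 1 n). pose proof (INR_S_pos n). pose proof (INR_S_pos (S n)).
      apply Rmult_le_pos; auto. apply Rlt_le, Rinv_0_lt_compat, Rmult_lt_0_compat; auto.
    - intros N. unfold w. rewrite sumN_harmonic_telescope.
      pose proof (Hr_nonneg 1 N). pose proof (INR_S_pos N).
      assert (0 <= (Hr 1 N + 1) / INR (S N)) by (apply Rdiv_le_0_compat; lra). lra. }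
  apply (ex_series_Rabs_le _ (fun n => / INR (S n) ^ 2 + 2 * w n)).
  - intros n. unfold hmaj, w. pose proof (Hr_nonneg 1 n) as h0. pose proof (INR_S_ge1 n) as a1.
    rewrite (S_INR (S n)). set (a := INR (S n)) in *. set (h := Hr 1 n) in *.
    rewrite Rabs_pos_eq by (apply Rdiv_le_0_compat; [lra | apply pow_lt; lra]).
    assert (/ a ^ 2 + 2 * (h / (a * (a + 1))) - (1 + h) / a ^ 2 = h * (a - 1) / (a ^ 2 * (a + 1)))
      by (field; lra).
    assert (0 <= h * (a - 1) / (a ^ 2 * (a + 1))) by (apply Rdiv_le_0_compat; nra).
    lra.
  - apply (ex_series_plus (fun n => / INR (S n) ^ 2) (fun n => 2 * w n)).
    + exact ex_series_inv_sq.
    + now apply ex_series_scalR.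
Qed.

Lemma harmonic_over_n_lim : is_lim_seq (fun n => Hr 1 (S n) / INR (S n)) 0.
Proof.
  assert (Hinv : Un_cv (fun n => / INR (S n)) 0).
  { apply is_lim_seq_Reals, (is_lim_seq_ext (fun n => 1 / INR (S n))), is_lim_seq_div_INR_S.
    intros; field; apply not_0_INR; lia. }
  pose proof (Cesaro_1 _ _ Hinv) as Hc.
  apply is_lim_seq_Reals, is_lim_seq_incr_1 in Hc. revert Hc. apply is_lim_seq_ext.
  intros n. simpl pred. rewrite <- sumN_f_R0, Hr_sumN.
  f_equal. apply sumN_ext. intros; now rewrite pow_1.
Qed.

(** * Newton's identities: P_k(H_n, ..., H_n^(k)) = e_k(1, 1/2, ..., 1/n) *)

Fixpoint esym (k N : nat) : R :=
  match N with
  | O => match k with O => 1 | S _ => 0 end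
  | S N' => esym k N' + match k with O => 0 | S k' => esym k' N' / INR (S N') end
  end.

Lemma esym_S k N :
  esym k (S N) = esym k N + match k with O => 0 | S k' => esym k' N / INR (S N) end.
Proof. reflexivity. Qed.

Lemma esym_0 N : esym 0 N = 1.
Proof. induction N; [reflexivity |]. rewrite esym_S, IHN; ring. Qed.

Lemma esym_nonneg k N : 0 <= esym k N.
Proof.
  revert k; induction N; intros k; [simpl; destruct k; lra |].
  rewrite esym_S. destruct k; [pose proof (IHN 0%nat); lra |].
  pose proof (IHN (S k)). pose proof (IHN k). pose proof (INR_S_pos N).
  assert (0 <= esym k N / INR (S N)) by (apply Rdiv_le_0_compat; lra). lra.
Qed.

Definition nsign (i : nat) : R := if Nat.even i then -1 else 1.

Lemma nsign_S i : nsign (S i) = (-1) ^ i.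
Proof.
  induction i using lt_wf_ind. destruct i as [| [| i]]; [unfold nsign; simpl; ring .. |].
  replace (nsign (S (S (S i)))) with (nsign (S i)) by (unfold nsign; now rewrite Nat.even_succ_succ).
  rewrite H by lia. simpl. ring.
Qed.

(* Adding the variable a to the alphabet: its contribution to the power sums in Newton's identity
   telescopes. *)
Lemma sumN_alt_new_variable (a : R) (e : nat -> R) m :
  sumN (fun i => (-1) ^ i * (a ^ S i * e (S m - S i)%nat
          + a ^ S i * match (S m - S i)%nat with O => 0 | S k => a * e k end)) (S m) = a * e m.
Proof.
  set (f i := a ^ S i * e (S m - S i)%nat).
  rewrite (sumN_ext _ (fun i => (-1) ^ i * (f i + if (i <? m)%nat then f (S i) else 0))).
  2:{ intros i hi. unfold f. destruct (Nat.ltb_spec i m).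
      - replace (S m - S i)%nat with (S (S m - S (S i))) by lia. simpl. ring.
      - replace (S m - S i)%nat with O by lia. ring. }
  rewrite sumN_S, (sumN_ext _ (fun i => (-1) ^ i * (f i + f (S i)))).
  2:{ intros i hi. destruct (Nat.ltb_spec i m); [reflexivity | lia]. }
  rewrite sumN_alt_telescope, Nat.ltb_irrefl. unfold f. simpl. rewrite Nat.sub_0_r. ring.
Qed.

Lemma esym_newton N n :
  INR n * esym n N = sumN (fun i => nsign (S i) * Hr (S i) N * esym (n - S i) N) n.
Proof.
  revert n. induction N; intros n.
  - rewrite sumN_zero; [destruct n; simpl; ring |]. intros i _. simpl Hr. ring.
  - destruct n as [| m]; [simpl; ring |].
    set (a := / INR (S N)).
    assert (HE : forall j, esym j (S N) = esym j N + match j with O => 0 | S k => a * esym k N end).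
    { intros j; destruct j; rewrite esym_S; unfold a; [ring | unfold Rdiv; ring]. }
    rewrite (sumN_ext _ (fun i => nsign (S i) * Hr (S i) N * esym (S m - S i) N
       + nsign (S i) * Hr (S i) N * match (S m - S i)%nat with O => 0 | S k => a * esym k N end
       + (-1) ^ i * (a ^ S i * esym (S m - S i) N
           + a ^ S i * match (S m - S i)%nat with O => 0 | S k => a * esym k N end))).
    2:{ intros i hi. rewrite HE, Hr_S, <- pow_inv, nsign_S. fold a. ring. }
    rewrite !sumN_plus, <- IHN, (sumN_alt_new_variable a (fun k => esym k N) m).
    rewrite sumN_S, Nat.sub_diag,
      (sumN_ext _ (fun i => a * (nsign (S i) * Hr (S i) N * esym (m - S i) N))).
    2:{ intros i hi. replace (S m - S i)%nat with (S (m - S i)) by lia. ring. }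
    rewrite sumN_scal, <- IHN, HE, (S_INR m). ring.
Qed.

Definition Pcoef (y : nat -> R) (J m : nat) : R :=
  (if Nat.even J then (-1) ^ m else 1) / INR (fact m) * (y J / INR J) ^ m.

Lemma Psum_S y j n :
  Psum y (S j) n = sum_f_R0 (fun m => Pcoef y (S j) m * Psum y j (n - m * S j)) (n / S j).
Proof. reflexivity. Qed.

Lemma Pcoef_0 y J : Pcoef y J 0 = 1.
Proof. unfold Pcoef. simpl. destruct (Nat.even J); field. Qed.

Lemma Pcoef_succ y J m : (1 <= J)%nat ->
  INR (S m) * INR J * Pcoef y J (S m) = nsign J * y J * Pcoef y J m.
Proof.
  intros HJ. unfold Pcoef, nsign. assert (INR J <> 0) by (apply not_0_INR; lia).
  pose proof (INR_fact_neq_0 m). pose proof (INR_S_pos m).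
  rewrite fact_simpl, mult_INR. destruct (Nat.even J); simpl pow; field; lra.
Qed.

Lemma Psum_0 y j : Psum y j 0 = 1.
Proof.
  induction j; [reflexivity |]. rewrite Psum_S. simpl sum_f_R0.
  replace (0 - 0 * S j)%nat with 0%nat by lia. rewrite Pcoef_0, IHj. ring.
Qed.

(* Newton's recursion for the partition sums; [m] counts the parts equal to J := S j. *)
Lemma Psum_newton_top y j n (J := S j) :
  sum_f_R0 (fun m => Pcoef y J m * INR (m * J) * Psum y j (n - m * J)) (n / J)
  = if (J <=? n)%nat then nsign J * y J * Psum y J (n - J) else 0.
Proof.
  destruct (Nat.leb_spec J n) as [Hn | Hn]; [| rewrite Nat.div_small by lia; simpl; ring].
  assert (Hd : (n / J = S ((n - J) / J))%nat).
  { replace n with (1 * J + (n - J))%nat at 1 by lia. rewrite Nat.div_add_l; unfold J; lia. }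
  rewrite Hd, <- sumN_f_R0, sumN_shift. simpl (0 * J)%nat. rewrite Rmult_0_r, Rmult_0_l, Rplus_0_l.
  change (Psum y J (n - J)) with (Psum y (S j) (n - J)).
  rewrite Psum_S, <- sumN_f_R0, <- sumN_scal.
  apply sumN_ext. intros m hm.
  rewrite mult_INR. replace (n - S m * J)%nat with (n - J - m * J)%nat by (simpl; lia).
  fold J. rewrite <- (Rmult_assoc (nsign J * y J)), <- Pcoef_succ by (unfold J; lia). ring.
Qed.

Lemma Psum_newton_lower y j n (J := S j) :
  (forall n', INR n' * Psum y j n' = sumN (fun i =>
     if (S i <=? n')%nat then nsign (S i) * y (S i) * Psum y j (n' - S i) else 0) j) ->
  sum_f_R0 (fun m => Pcoef y J m * (INR (n - m * J) * Psum y j (n - m * J))) (n / J)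
  = sumN (fun i => if (S i <=? n)%nat then nsign (S i) * y (S i) * Psum y J (n - S i) else 0) j.
Proof.
  intros IH. assert (HJ : J <> 0%nat) by (unfold J; lia).
  rewrite (sum_eq _ (fun m => sumN (fun i => Pcoef y J m *
      (if (S i <=? n - m * J)%nat then nsign (S i) * y (S i) * Psum y j (n - m * J - S i) else 0)) j)).
  2:{ intros m hm. rewrite IH, <- sumN_scal. reflexivity. }
  rewrite <- sumN_f_R0, sumN_swap. apply sumN_ext. intros i hi.
  destruct (Nat.leb_spec (S i) n) as [Hin | Hin].
  2:{ apply sumN_zero. intros m hm. destruct (Nat.leb_spec (S i) (n - m * J)); [lia | ring]. }
  change (Psum y J (n - S i)) with (Psum y (S j) (n - S i)).
  rewrite Psum_S, <- sumN_f_R0, <- sumN_scal. fold J.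
  rewrite <- (sumN_trunc_if (fun m => (S i <=? n - m * J)%nat)
       (fun m => nsign (S i) * y (S i) * (Pcoef y J m * Psum y j (n - S i - m * J))) (S (n / J))).
  - apply sumN_ext. intros m hm. destruct (Nat.leb_spec (S i) (n - m * J)); [| ring].
    replace (n - m * J - S i)%nat with (n - S i - m * J)%nat by lia. ring.
  - apply le_n_S, Nat.Private_NDivProp.div_le_mono; lia.
  - intros m hm. rewrite Nat.leb_le. split; intros h.
    + apply le_n_S, Nat.div_le_lower_bound; auto. nia.
    + assert (m <= (n - S i) / J)%nat by lia.
      pose proof (Nat.Private_NDivProp.mul_div_le (n - S i) J HJ). nia.
Qed.

Lemma Psum_newton y j n : INR n * Psum y j n =
  sumN (fun i => if (S i <=? n)%nat then nsign (S i) * y (S i) * Psum y j (n - S i) else 0) j.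
Proof.
  revert n. induction j; intros n.
  - simpl. destruct (Nat.eqb_spec n 0); [subst; simpl |]; ring.
  - rewrite Psum_S, sumN_S, scal_sum.
    rewrite (sum_eq _ (fun m => Pcoef y (S j) m * INR (m * S j) * Psum y j (n - m * S j)
        + Pcoef y (S j) m * (INR (n - m * S j) * Psum y j (n - m * S j)))).
    2:{ intros m hm. pose proof (Nat.Private_NDivProp.mul_div_le n (S j) ltac:(lia)).
        replace (INR n) with (INR (m * S j) + INR (n - m * S j)) by (rewrite <- plus_INR; f_equal; nia).
        ring. }
    rewrite plus_sum, Psum_newton_top, Psum_newton_lower; auto. ring.
Qed.

Lemma P_harmonic_esym k N : P k (fun i => Hr i N) = esym k N.
Proof.
  unfold P. set (y := fun i => Hr i N).
  enough (H : forall n, (n <= k)%nat -> Psum y k n = esym n N) by auto.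
  intros n. induction n as [n IH] using lt_wf_ind. intros hn.
  destruct n as [| m]; [now rewrite Psum_0, esym_0 |].
  pose proof (Psum_newton y k (S m)) as H1.
  rewrite (sumN_trunc_tail _ (S m) k) in H1; auto.
  2:{ intros i hi. destruct (Nat.leb_spec (S i) (S m)); [lia | auto]. }
  rewrite (sumN_ext _ (fun i => nsign (S i) * Hr (S i) N * esym (S m - S i) N)) in H1.
  2:{ intros i hi. destruct (Nat.leb_spec (S i) (S m)); [| lia]. rewrite IH by lia. reflexivity. }
  rewrite <- esym_newton in H1. pose proof (INR_S_pos m).
  apply (Rmult_eq_reg_l (INR (S m))); lra.
Qed.

(** * The generating function F(x, y) in closed form *)

Fixpoint rprod (x y : R) (i n : nat) : R :=
  match n with
  | O => 1
  | S n' => rprod x y i n' * ((INR (S n') + x) / (INR (S n') + INR i - y))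
  end.

Definition psi x y i n := rprod x y i n / INR (S n).
Definition phi x y i n := rprod x y i n / INR (S n) ^ 2.
Definition Psi x y i := Series (psi x y i).
Definition Phi x y i := Series (phi x y i).

Definition ym (y : R) (i : nat) := INR i - y.
Definition ukernel (x y : R) (i : nat) := / (ym y i * (ym y i - x)).
Definition Qsum (y : R) (n : nat) := sumN (fun t => / ym y (S t)) n.
Definition rnum (y : R) (n : nat) := 1 - y * Qsum y n.

Lemma ym_ge y i : 0 <= y <= 1/4 -> (1 <= i)%nat -> 3/4 * INR i <= ym y i.
Proof. intros hy hi. unfold ym. apply le_INR in hi. simpl in hi. lra. Qed.

Lemma Qsum_le y n : 0 <= y <= 1/4 -> 0 <= Qsum y n <= 4/3 * Hr 1 n.
Proof.
  intros hy. unfold Qsum. rewrite Hr_sumN, <- sumN_scal. split.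
  - apply sumN_nonneg. intros i _. pose proof (ym_ge y (S i) hy ltac:(lia)).
    pose proof (INR_S_pos i). apply Rlt_le, Rinv_0_lt_compat; lra.
  - apply sumN_le. intros i _. pose proof (ym_ge y (S i) hy ltac:(lia)). pose proof (INR_S_ge1 i).
    rewrite pow_1. replace (4 / 3 * / INR (S i)) with (/ (3/4 * INR (S i))) by (field; lra).
    apply Rinv_le_contravar; lra.
Qed.

Lemma rnum_le y n : 0 <= y <= 1/4 -> Rabs (rnum y n) <= 1 + Hr 1 n.
Proof.
  intros hy. unfold rnum. pose proof (Qsum_le y n hy). pose proof (Hr_nonneg 1 n).
  apply Rabs_le. split; nra.
Qed.

Section Telescoping.

Variables x y : R.
Hypothesis Hx : 0 <= x <= 1/4.
Hypothesis Hy : 0 <= y <= 1/4.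

Lemma rprod_S i n : rprod x y i (S n) = rprod x y i n * ((INR (S n) + x) / (INR (S n) + INR i - y)).
Proof. reflexivity. Qed.

Lemma rprod_den_ge i n : 3/4 <= INR (S n) + INR i - y.
Proof. pose proof (INR_S_ge1 n). pose proof (pos_INR i). lra. Qed.

Lemma rprod_pos i n : 0 < rprod x y i n.
Proof.
  induction n; [simpl; lra | rewrite rprod_S]. pose proof (rprod_den_ge i n). pose proof (INR_S_pos n).
  apply Rmult_lt_0_compat; auto. apply Rdiv_lt_0_compat; lra.
Qed.

Lemma rprod_shift i n : (INR i + 1 - y) * rprod x y i n = (INR n + 1 + INR i - y) * rprod x y (S i) n.
Proof.
  induction n; [simpl; ring |].
  rewrite !rprod_S. pose proof (rprod_den_ge i n). pose proof (rprod_den_ge (S i) n).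
  rewrite S_INR, (S_INR i) in *.
  rewrite <- Rmult_assoc, IHn. field. lra.
Qed.

Lemma rprod_le i n : (2 <= i)%nat -> rprod x y i n <= (1 + x) / (INR n + 1 + x).
Proof.
  intros hi. apply le_INR in hi. simpl (INR 2) in hi. induction n.
  - simpl. right. field. lra.
  - rewrite rprod_S. pose proof (rprod_pos i n). pose proof (rprod_den_ge i n). pose proof (INR_S_pos n).
    rewrite (S_INR n) in *.
    apply Rle_trans with ((1 + x) / (INR n + 1 + x) * ((INR n + 1 + x) / (INR n + 1 + INR i - y))).
    { apply Rmult_le_compat_r; auto. apply Rdiv_le_0_compat; lra. }
    replace ((1 + x) / (INR n + 1 + x) * ((INR n + 1 + x) / (INR n + 1 + INR i - y)))
      with ((1 + x) / (INR n + 1 + INR i - y)) by (field; lra).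
    apply Rmult_le_compat_l; [lra |]. apply Rinv_le_contravar; lra.
Qed.

Lemma rprod_sq_le i n : (1 <= i)%nat -> rprod x y i n ^ 2 <= (1 + x) / (INR n + 1 + x).
Proof.
  intros hi. apply le_INR in hi. simpl (INR 1) in hi. induction n.
  - simpl. right. field. lra.
  - rewrite rprod_S. pose proof (rprod_pos i n). pose proof (rprod_den_ge i n). pose proof (INR_S_pos n).
    rewrite (S_INR n) in *. set (d := INR n + 1 + INR i - y) in *. set (a := INR n + 1 + x) in *.
    assert (Hd : a + 1/2 <= d) by (unfold a, d; lra).
    assert (Ha : 0 < a) by (unfold a; lra).
    rewrite Rpow_mult_distr.
    apply Rle_trans with ((1 + x) / a * (a / d) ^ 2).
    { apply Rmult_le_compat_r; auto. apply pow_le, Rdiv_le_0_compat; lra. }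
    replace (INR n + 1 + 1 + x) with (a + 1) by (unfold a; ring).
    replace ((1 + x) / a * (a / d) ^ 2) with ((1 + x) * a / (d * d)) by (field; lra).
    apply Rmult_le_reg_r with (d * d * (a + 1)); [nra |].
    replace ((1 + x) * a / (d * d) * (d * d * (a + 1))) with ((1 + x) * (a * (a + 1))) by (field; lra).
    replace ((1 + x) / (a + 1) * (d * d * (a + 1))) with ((1 + x) * (d * d)) by (field; lra).
    apply Rmult_le_compat_l; nra.
Qed.

Lemma ratio_le n : (1 + x) / (INR n + 1 + x) <= 2 / INR (S n).
Proof.
  rewrite S_INR. pose proof (pos_INR n).
  apply Rmult_le_reg_r with ((INR n + 1 + x) * (INR n + 1)); [nra |].
  replace ((1 + x) / (INR n + 1 + x) * ((INR n + 1 + x) * (INR n + 1)))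
    with ((1 + x) * (INR n + 1)) by (field; lra).
  replace (2 / (INR n + 1) * ((INR n + 1 + x) * (INR n + 1))) with (2 * (INR n + 1 + x)) by (field; lra).
  nra.
Qed.

Lemma rprod_lim0 i : (1 <= i)%nat -> is_lim_seq (rprod x y i) 0.
Proof.
  intros hi. apply is_lim_seq_Reals. intros e he.
  destruct (INR_unbounded (2 / (e * e))) as [N HN]. exists N. intros n hn.
  unfold R_dist. rewrite Rminus_0_r. pose proof (rprod_pos i n).
  rewrite Rabs_pos_eq by lra.
  pose proof (rprod_sq_le i n hi). pose proof (ratio_le n).
  apply le_INR in hn. pose proof (INR_S_pos n).
  assert (2 / INR (S n) < e * e).
  { apply Rmult_lt_reg_r with (INR (S n)); auto. unfold Rdiv; rewrite Rmult_assoc, Rinv_l, Rmult_1_r by lra.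
    assert (2 / (e * e) * (e * e) = 2) by (field; lra). rewrite S_INR.
    assert (2 / (e * e) * (e * e) < (INR n + 1) * (e * e)) by (apply Rmult_lt_compat_r; nra). lra. }
  destruct (Rlt_or_le (rprod x y i n) e); auto. simpl in *. nra.
Qed.

Lemma sumN_rprod_succ j N : (1 <= j)%nat ->
  sumN (rprod x y (S j)) N = (INR j + 1 - y) * (1 - rprod x y j N) / (INR j - y - x).
Proof.
  intros hj. apply le_INR in hj. simpl (INR 1) in hj. induction N; [simpl; field; lra |].
  rewrite sumN_S, IHN, rprod_S. pose proof (rprod_shift j N) as K.
  pose proof (rprod_den_ge j N). rewrite S_INR in *.
  replace (rprod x y (S j) N) with ((INR j + 1 - y) * rprod x y j N / (INR N + 1 + INR j - y))
    by (rewrite K; field; lra).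
  field. lra.
Qed.

Lemma is_series_rprod_succ j : (1 <= j)%nat ->
  is_series (rprod x y (S j)) ((INR j + 1 - y) / (INR j - y - x)).
Proof.
  intros hj. apply is_series_sumN. set (c := (INR j + 1 - y) / (INR j - y - x)).
  apply (is_lim_seq_ext (fun N => c + - c * rprod x y j N)).
  - intros N. rewrite sumN_rprod_succ; auto. apply le_INR in hj. simpl (INR 1) in hj.
    unfold c. field. lra.
  - replace (Finite c) with (Finite (c + - c * 0)) by (f_equal; ring).
    apply is_lim_seq_plus'; [apply is_lim_seq_const |].
    apply is_lim_seq_mult'; [apply is_lim_seq_const | now apply rprod_lim0].
Qed.

Lemma psi_shift i n :
  (INR i + 1 - y) * psi x y i n - (INR i - y) * psi x y (S i) n = rprod x y (S i) n.
Proof.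
  unfold psi. pose proof (INR_S_pos n). pose proof (rprod_shift i n) as K.
  rewrite S_INR in *. unfold Rdiv. rewrite <- Rmult_assoc, K. field. lra.
Qed.

Lemma phi_shift i n :
  (INR i + 1 - y) * phi x y i n - (INR i - y) * phi x y (S i) n = psi x y (S i) n.
Proof.
  unfold psi, phi. pose proof (INR_S_pos n). pose proof (rprod_shift i n) as K.
  rewrite S_INR in *. unfold Rdiv. rewrite <- Rmult_assoc, K. field. lra.
Qed.

Lemma psi_nonneg i n : 0 <= psi x y i n.
Proof. apply Rdiv_le_0_compat; [apply Rlt_le, rprod_pos | apply INR_S_pos]. Qed.

Lemma phi_nonneg i n : 0 <= phi x y i n.
Proof. apply Rdiv_le_0_compat; [apply Rlt_le, rprod_pos | apply pow_lt, INR_S_pos]. Qed.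

Lemma phi_le_psi i n : phi x y i n <= psi x y i n.
Proof.
  unfold phi, psi. pose proof (rprod_pos i n). pose proof (INR_S_ge1 n).
  apply Rmult_le_compat_l; [lra |]. apply Rinv_le_contravar; [lra |]. rewrite <- Rsqr_pow2. unfold Rsqr. nra.
Qed.

Lemma psi_le i n : (2 <= i)%nat -> psi x y i n <= 2 * / INR (S n) ^ 2.
Proof.
  intros hi. unfold psi. pose proof (rprod_le i n hi). pose proof (ratio_le n).
  pose proof (INR_S_pos n).
  replace (2 * / INR (S n) ^ 2) with (2 / INR (S n) / INR (S n)) by (field; lra).
  apply Rmult_le_compat_r; [apply Rlt_le, Rinv_0_lt_compat; lra | lra].
Qed.

Lemma ex_series_psi_ge2 i : (2 <= i)%nat -> ex_series (psi x y i).
Proof.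
  intros hi. apply (ex_series_Rabs_le _ (fun n => 2 * / INR (S n) ^ 2)); [| exact ex_series_inv_sq_2].
  intros n. rewrite Rabs_pos_eq by apply psi_nonneg. now apply psi_le.
Qed.

Lemma ex_series_psi i : (1 <= i)%nat -> ex_series (psi x y i).
Proof.
  intros hi. destruct (Nat.eq_dec i 1) as [-> | hne]; [| apply ex_series_psi_ge2; lia].
  apply (ex_series_of_relation _ (psi x y 2) (rprod x y 2) (INR 1 + 1 - y) (INR 1 - y)).
  - simpl; lra.
  - apply psi_shift.
  - eexists. apply (is_series_rprod_succ 1); lia.
  - now apply ex_series_psi_ge2.
Qed.

Lemma ex_series_phi i : ex_series (phi x y i).
Proof.
  assert (Hle : forall j, (1 <= j)%nat -> ex_series (phi x y j)).
  { intros j hj. apply (ex_series_Rabs_le _ (psi x y j)); [| now apply ex_series_psi].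
    intros n. rewrite Rabs_pos_eq by apply phi_nonneg. apply phi_le_psi. }
  destruct i as [| i]; [| apply Hle; lia].
  apply (ex_series_of_relation _ (phi x y 1) (psi x y 1) (INR 0 + 1 - y) (INR 0 - y)).
  - simpl; lra.
  - apply phi_shift.
  - apply ex_series_psi; lia.
  - apply Hle; lia.
Qed.

Lemma Psi_shift i : (1 <= i)%nat ->
  (INR i + 1 - y) * Psi x y i - (INR i - y) * Psi x y (S i) = (INR i + 1 - y) / (INR i - y - x).
Proof.
  intros hi. unfold Psi. rewrite (Series_of_relation _ _ (rprod x y (S i))).
  - apply is_series_unique, is_series_rprod_succ; auto.
  - apply psi_shift.
  - now apply ex_series_psi.
  - apply ex_series_psi; lia.
Qed.

Lemma Phi_shift i : (INR i + 1 - y) * Phi x y i - (INR i - y) * Phi x y (S i) = Psi x y (S i).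
Proof. apply Series_of_relation; [apply phi_shift | apply ex_series_phi ..]. Qed.

Lemma Phi_Psi_bounds i : (2 <= i)%nat -> 0 <= Phi x y i <= Psi x y i /\ Psi x y i <= 4.
Proof.
  intros hi. unfold Phi, Psi. split; [split |].
  - apply Series_nonneg; [apply phi_nonneg | apply ex_series_phi].
  - apply Series_le; [intros n; split; [apply phi_nonneg | apply phi_le_psi] |].
    apply ex_series_psi; lia.
  - apply Series_sumN_le; [apply psi_nonneg | now apply ex_series_psi_ge2 |].
    intros N. apply Rle_trans with (sumN (fun n => 2 * / INR (S n) ^ 2) N).
    + apply sumN_le; intros; now apply psi_le.
    + rewrite sumN_scal, <- Hr_sumN. pose proof (H2_le2 N). lra.
Qed.

(* Dividing the shift relations by (i - y)(i + 1 - y) turns them into telescoping sums. *)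
Lemma Psi_telescope_step i : (1 <= i)%nat ->
  Psi x y i / ym y i - Psi x y (S i) / ym y (S i) = ukernel x y i.
Proof.
  intros hi. pose proof (Psi_shift i hi) as H. pose proof (ym_ge y i Hy hi) as Ha.
  apply le_INR in hi. simpl in hi. unfold ukernel, ym in *. rewrite S_INR.
  replace (Psi x y i / (INR i - y) - Psi x y (S i) / (INR i + 1 - y))
    with (((INR i + 1 - y) * Psi x y i - (INR i - y) * Psi x y (S i)) / ((INR i - y) * (INR i + 1 - y)))
    by (field; lra).
  rewrite H. field. lra.
Qed.

Definition Usum N := sumN (fun n => ukernel x y (S n)) N.
Definition Ulim := Psi x y 1 / ym y 1.

Lemma Psi_telescope N : Psi x y (S N) / ym y (S N) = Ulim - Usum N.
Proof.
  induction N; unfold Usum in *; [simpl; unfold Ulim; ring |].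
  rewrite sumN_S. pose proof (Psi_telescope_step (S N) ltac:(lia)). lra.
Qed.

Lemma Phi_telescope_step i : (1 <= i)%nat ->
  Phi x y i / ym y i - Phi x y (S i) / ym y (S i) = (Ulim - Usum i) / ym y i.
Proof.
  intros hi. pose proof (Phi_shift i) as H. rewrite <- Psi_telescope.
  pose proof (ym_ge y i Hy hi) as Ha. apply le_INR in hi. simpl in hi. unfold ym in *. rewrite S_INR in *.
  replace (Phi x y i / (INR i - y) - Phi x y (S i) / (INR i + 1 - y))
    with (((INR i + 1 - y) * Phi x y i - (INR i - y) * Phi x y (S i)) / ((INR i - y) * (INR i + 1 - y)))
    by (field; lra).
  rewrite H. field. lra.
Qed.

Definition Wsum N := sumN (fun n => (Ulim - Usum (S n)) / ym y (S n)) N.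

Lemma Phi_telescope N : Phi x y (S N) / ym y (S N) = Phi x y 1 / ym y 1 - Wsum N.
Proof.
  induction N; unfold Wsum in *; [simpl; ring |].
  rewrite sumN_S. pose proof (Phi_telescope_step (S N) ltac:(lia)). lra.
Qed.

Lemma Phi0_eq : Phi x y 0 = Ulim - y * (Phi x y 1 / ym y 1).
Proof.
  pose proof (Phi_shift 0) as H. unfold Ulim, ym. simpl (INR 0) in *. simpl (INR 1).
  apply (Rmult_eq_reg_l (0 + 1 - y)); [| lra].
  rewrite <- H. field. lra.
Qed.

Lemma sumN_rhs_partial N :
  sumN (fun n => ukernel x y (S n) * rnum y n) N = Usum N - y * (Wsum N - (Ulim - Usum N) * Qsum y N).
Proof.
  assert (Abel : sumN (fun n => ukernel x y (S n) * Qsum y n) N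
                 = Usum N * Qsum y N - sumN (fun n => Usum (S n) / ym y (S n)) N).
  { induction N; [unfold Usum, Qsum; simpl; ring |].
    rewrite sumN_S, IHN. unfold Usum, Qsum. rewrite !sumN_S. unfold Rdiv. ring. }
  unfold rnum, Wsum.
  rewrite (sumN_ext _ (fun n => ukernel x y (S n) - y * (ukernel x y (S n) * Qsum y n))) by (intros; ring).
  rewrite (sumN_ext (fun n => (Ulim - Usum (S n)) / ym y (S n))
             (fun n => Ulim * / ym y (S n) - Usum (S n) / ym y (S n))) by (intros; unfold Rdiv; ring).
  rewrite !sumN_minus, !sumN_scal, Abel. fold (Usum N). fold (Qsum y N). ring.
Qed.

Lemma tail_over_ym_lim (F : nat -> R) : (forall i, (2 <= i)%nat -> 0 <= F i <= 4) ->
  is_lim_seq (fun n => F (S (S n)) / ym y (S (S n))) 0.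
Proof.
  intros HF. apply (is_lim_seq_0_dominated _ (fun n => 4 / INR (S n))); [| apply is_lim_seq_div_INR_S].
  intros n. destruct (HF (S (S n)) ltac:(lia)). pose proof (INR_S_pos n).
  assert (INR (S n) <= ym y (S (S n))) by (unfold ym; rewrite (S_INR (S n)); lra).
  rewrite Rabs_pos_eq by (apply Rdiv_le_0_compat; lra).
  apply Rle_trans with (4 / ym y (S (S n))).
  - apply Rmult_le_compat_r; [apply Rlt_le, Rinv_0_lt_compat |]; lra.
  - apply Rmult_le_compat_l; [lra | apply Rinv_le_contravar; lra].
Qed.

Lemma Usum_lim : is_lim_seq (fun N => Ulim - Usum N) 0.
Proof.
  apply is_lim_seq_incr_1. apply (is_lim_seq_ext (fun n => Psi x y (S (S n)) / ym y (S (S n)))).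
  - intros n. apply Psi_telescope.
  - apply tail_over_ym_lim. intros i hi. pose proof (Phi_Psi_bounds i hi). lra.
Qed.

Lemma Wsum_lim : is_lim_seq (fun N => Phi x y 1 / ym y 1 - Wsum N) 0.
Proof.
  apply is_lim_seq_incr_1. apply (is_lim_seq_ext (fun n => Phi x y (S (S n)) / ym y (S (S n)))).
  - intros n. apply Phi_telescope.
  - apply tail_over_ym_lim. intros i hi. pose proof (Phi_Psi_bounds i hi). lra.
Qed.

Lemma Usum_Qsum_lim : is_lim_seq (fun N => (Ulim - Usum N) * Qsum y N) 0.
Proof.
  apply is_lim_seq_incr_1.
  apply (is_lim_seq_0_dominated _ (fun n => 64/9 * (Hr 1 (S n) / INR (S n)))).
  2:{ replace (Finite 0) with (Rbar_mult (64/9) 0) by (simpl; f_equal; ring).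
      apply is_lim_seq_scal_l, harmonic_over_n_lim. }
  intros n. rewrite <- Psi_telescope. destruct (Phi_Psi_bounds (S (S n)) ltac:(lia)) as [[h0 h1] h2].
  pose proof (ym_ge y (S (S n)) Hy ltac:(lia)). pose proof (INR_S_pos n).
  pose proof (Qsum_le y (S n) Hy) as [q1 q2]. pose proof (Hr_nonneg 1 (S n)).
  rewrite (S_INR (S n)) in *.
  set (A := ym y (S (S n))) in *. set (B := INR (S n)) in *. set (h := Hr 1 (S n)) in *.
  rewrite Rabs_pos_eq by (apply Rmult_le_pos; [apply Rdiv_le_0_compat |]; lra).
  apply Rle_trans with (4 / A * (4/3 * h)).
  - apply Rmult_le_compat; try lra; [apply Rdiv_le_0_compat; lra |].
    apply Rmult_le_compat_r; [apply Rlt_le, Rinv_0_lt_compat |]; lra.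
  - replace (4 / A * (4 / 3 * h)) with (16/3 * h * / A) by (field; lra).
    replace (64 / 9 * (h / B)) with (16/3 * h * / (3/4 * B)) by (field; lra).
    apply Rmult_le_compat_l; [lra | apply Rinv_le_contravar; lra].
Qed.

Theorem generating_identity :
  is_series (fun n => ukernel x y (S n) * rnum y n) (Phi x y 0).
Proof.
  apply is_series_sumN.
  apply (is_lim_seq_ext (fun N => Ulim - (Ulim - Usum N)
     - y * ((Phi x y 1 / ym y 1 - (Phi x y 1 / ym y 1 - Wsum N)) - (Ulim - Usum N) * Qsum y N))).
  { intros N. rewrite sumN_rhs_partial. ring. }
  rewrite Phi0_eq.
  replace (Ulim - y * (Phi x y 1 / ym y 1)) with (Ulim - 0 - y * ((Phi x y 1 / ym y 1 - 0) - 0)) by ring.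
  apply is_lim_seq_minus'; [apply is_lim_seq_minus'; [apply is_lim_seq_const | apply Usum_lim] |].
  apply is_lim_seq_mult'; [apply is_lim_seq_const |].
  apply is_lim_seq_minus'; [| apply Usum_Qsum_lim].
  apply is_lim_seq_minus'; [apply is_lim_seq_const | apply Wsum_lim].
Qed.

End Telescoping.

(** * Comparing coefficients of two expansions *)

Lemma Rle_0_of_le_linear (a C d : R) : 0 < d -> (forall x, 0 < x <= d -> a <= C * x) -> a <= 0.
Proof.
  intros hd H. destruct (Rle_or_lt a 0) as [| ha]; auto. exfalso.
  set (C' := Rabs C + 1). assert (hC : 0 < C') by (unfold C'; pose proof (Rabs_pos C); lra).
  set (x := Rmin d (a / (2 * C'))).
  assert (hx : 0 < x) by (apply Rmin_glb_lt; [lra | apply Rdiv_lt_0_compat; lra]).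
  specialize (H x (conj hx (Rmin_l _ _))).
  assert (C * x <= C' * x) by (apply Rmult_le_compat_r; [lra | unfold C'; pose proof (Rle_abs C); lra]).
  assert (C' * x <= a / 2).
  { apply Rle_trans with (C' * (a / (2 * C'))); [apply Rmult_le_compat_l; [lra | apply Rmin_r] |].
    right; field; lra. }
  lra.
Qed.

Lemma poly_coef0_zero k (c : nat -> R) M d : 0 < d ->
  (forall x, 0 < x <= d -> Rabs (sumN (fun i => c i * x ^ i) (S k)) <= M * x ^ S k) -> c O = 0.
Proof.
  intros hd H. set (Sc := sumN (fun i => Rabs (c (S i))) k).
  enough (Rabs (c O) <= 0) by (apply Rabs_eq_0; pose proof (Rabs_pos (c O)); lra).
  apply (Rle_0_of_le_linear _ (Rabs M + Sc) (Rmin d 1)); [apply Rmin_glb_lt; lra |].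
  intros x [hx0 hx]. pose proof (Rmin_l d 1). pose proof (Rmin_r d 1).
  specialize (H x ltac:(split; lra)). rewrite sumN_shift, pow_O, Rmult_1_r in H.
  set (T := sumN (fun i => c (S i) * x ^ S i) k) in H.
  assert (HT : Rabs T <= x * Sc).
  { unfold T, Sc. eapply Rle_trans; [apply sumN_abs |]. rewrite <- sumN_scal. apply sumN_le. intros i _.
    rewrite Rabs_mult, Rmult_comm, Rabs_pos_eq by (apply pow_le; lra).
    apply Rmult_le_compat_r; [apply Rabs_pos |]. simpl.
    assert (x ^ i <= 1) by (rewrite <- (pow1 i); apply pow_incr; lra).
    pose proof (pow_le x i ltac:(lra)). nra. }
  assert (M * x ^ S k <= Rabs M * x).
  { assert (0 <= x ^ k <= 1) by (split; [apply pow_le; lra | rewrite <- (pow1 k); apply pow_incr; lra]).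
    simpl. apply Rle_trans with (Rabs M * (x * x ^ k)); [apply Rmult_le_compat_r; [nra | apply Rle_abs] |].
    apply Rmult_le_compat_l; [apply Rabs_pos | nra]. }
  replace (c O) with ((c O + T) - T) by ring.
  eapply Rle_trans; [apply Rabs_triang |]. rewrite Rabs_Ropp. lra.
Qed.

Lemma poly_coefs_zero k : forall (c : nat -> R) M d, 0 < d ->
  (forall x, 0 < x <= d -> Rabs (sumN (fun i => c i * x ^ i) (S k)) <= M * x ^ S k) ->
  forall i, (i <= k)%nat -> c i = 0.
Proof.
  induction k; intros c M d hd H.
  - intros i hi. replace i with O by lia. apply (poly_coef0_zero 0 c M d); auto.
  - assert (h0 : c O = 0) by (apply (poly_coef0_zero (S k) c M d); auto).
    intros [| i] hi; auto.
    apply (IHk (fun i => c (S i)) M d hd); [| lia].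
    intros x hx. specialize (H x hx). rewrite sumN_shift, h0, Rmult_0_l, Rplus_0_l in H.
    rewrite (sumN_ext _ (fun i => x * (c (S i) * x ^ i))) in H by (intros; simpl; ring).
    rewrite sumN_scal, Rabs_mult, Rabs_pos_eq in H by lra.
    apply Rmult_le_reg_l with x; [lra |]. replace (x * (M * x ^ S k)) with (M * x ^ S (S k)) by (simpl; ring).
    auto.
Qed.

Lemma Series_expansion k (A : nat -> nat -> R) (RA MA : nat -> R) x L :
  (forall i, (i <= k)%nat -> ex_series (A i)) -> ex_series MA -> (forall n, Rabs (RA n) <= MA n) ->
  is_series (fun n => sumN (fun i => A i n * x ^ i) (S k) + x ^ S k * RA n) L ->
  L = sumN (fun i => Series (A i) * x ^ i) (S k) + x ^ S k * Series RA /\ Rabs (Series RA) <= Series MA.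
Proof.
  intros HA HM HR HL. split; [| now apply Series_Rabs_le].
  apply is_series_unique in HL. rewrite <- HL. apply is_series_unique, is_series_plusR.
  - apply (is_series_sumN_fin (S k) (fun i n => A i n * x ^ i)). intros i hi.
    apply is_series_scal_r, Series_correct, HA; lia.
  - apply is_series_scalR, Series_correct, (ex_series_Rabs_le _ MA); auto.
Qed.

(* The difference of the two coefficient vectors gives a polynomial of degree k that is
   O(x^(k+1)) on (0, d]. *)
Lemma Series_coefs_unique k d (A B : nat -> nat -> R) (RA RB : R -> nat -> R) (MA MB : nat -> R) :
  0 < d ->
  (forall i, (i <= k)%nat -> ex_series (A i)) -> (forall i, (i <= k)%nat -> ex_series (B i)) ->
  ex_series MA -> ex_series MB ->
  (forall x n, 0 < x <= d -> Rabs (RA x n) <= MA n) ->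
  (forall x n, 0 < x <= d -> Rabs (RB x n) <= MB n) ->
  (forall x, 0 < x <= d -> exists L,
      is_series (fun n => sumN (fun i => A i n * x ^ i) (S k) + x ^ S k * RA x n) L /\
      is_series (fun n => sumN (fun i => B i n * x ^ i) (S k) + x ^ S k * RB x n) L) ->
  forall i, (i <= k)%nat -> Series (A i) = Series (B i).
Proof.
  intros hd HA HB HMA HMB HRA HRB HL i hi.
  enough (Series (A i) - Series (B i) = 0) by lra.
  apply (poly_coefs_zero k (fun i => Series (A i) - Series (B i)) (Series MA + Series MB) d hd); auto.
  intros x hx. destruct (HL x hx) as [L [H1 H2]].
  destruct (Series_expansion k A (RA x) MA x L HA HMA (fun n => HRA x n hx) H1) as [E1 B1].
  destruct (Series_expansion k B (RB x) MB x L HB HMB (fun n => HRB x n hx) H2) as [E2 B2].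
  rewrite (sumN_ext _ (fun i => Series (A i) * x ^ i - Series (B i) * x ^ i)) by (intros; ring).
  rewrite sumN_minus.
  replace (sumN (fun i => Series (A i) * x ^ i) (S k) - sumN (fun i => Series (B i) * x ^ i) (S k))
    with (x ^ S k * (Series (RB x) - Series (RA x))) by lra.
  rewrite Rabs_mult, Rabs_pos_eq, Rmult_comm by (apply pow_le; lra).
  apply Rmult_le_compat_r; [apply pow_le; lra |].
  eapply Rle_trans; [apply Rabs_triang |]. rewrite Rabs_Ropp. lra.
Qed.

(** * Coefficients of x^k *)

Fixpoint xprod (x : R) (n : nat) : R :=
  match n with O => 1 | S n' => xprod x n' * (1 + x / INR (S n')) end.

Fixpoint yprod (y : R) (n : nat) : R :=
  match n with O => 1 | S n' => yprod y n' * (INR (S n') / (INR (S n') - y)) end.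

Lemma xprod_S x n : xprod x (S n) = xprod x n * (1 + x / INR (S n)).
Proof. reflexivity. Qed.

Lemma yprod_S y n : yprod y (S n) = yprod y n * (INR (S n) / (INR (S n) - y)).
Proof. reflexivity. Qed.

Lemma rprod0_split x y n : 0 <= x <= 1/4 -> 0 <= y <= 1/4 -> rprod x y 0 n = xprod x n * yprod y n.
Proof.
  intros hx hy. induction n; [simpl; ring |].
  rewrite rprod_S, xprod_S, yprod_S, IHn.
  pose proof (rprod_den_ge y hy 0 n). simpl (INR 0) in *. pose proof (INR_S_pos n). field. lra.
Qed.

Lemma yprod_pos y n : 0 <= y <= 1/4 -> 0 < yprod y n.
Proof.
  intros hy. induction n; [simpl; lra | rewrite yprod_S]. pose proof (INR_S_ge1 n).
  apply Rmult_lt_0_compat; auto. apply Rdiv_lt_0_compat; lra.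
Qed.

Lemma xprod_esym x n K : (n < K)%nat -> xprod x n = sumN (fun i => esym i n * x ^ i) K.
Proof.
  revert K. induction n; intros K hK; (destruct K as [| K]; [lia | rewrite sumN_shift]).
  - rewrite sumN_zero; [simpl; ring |]. intros i _. simpl. ring.
  - rewrite (sumN_ext _ (fun i => esym (S i) n * x ^ S i + x / INR (S n) * (esym i n * x ^ i))).
    2:{ intros i hi. rewrite esym_S. simpl pow. pose proof (INR_S_pos n). field. lra. }
    rewrite sumN_plus, sumN_scal, <- (IHn K), xprod_S by lia.
    assert (Hb := IHn (S K) ltac:(lia)). rewrite sumN_shift in Hb.
    rewrite !esym_0 in *. simpl pow in *. lra.
Qed.

Definition xtail k x n := sumN (fun i => esym (S k + i) n * x ^ i) (S n).

Lemma xprod_split k x n : xprod x n = sumN (fun i => esym i n * x ^ i) (S k) + x ^ S k * xtail k x n.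
Proof.
  rewrite (xprod_esym x n (S k + S n)) by lia. rewrite sumN_add. f_equal.
  unfold xtail. rewrite <- sumN_scal. apply sumN_ext. intros i _. rewrite pow_add. ring.
Qed.

Lemma xtail_le k x d n : 0 <= x <= d -> 0 <= xtail k x n <= xtail k d n.
Proof.
  intros hx. unfold xtail. split.
  - apply sumN_nonneg. intros i _. apply Rmult_le_pos; [apply esym_nonneg | apply pow_le; lra].
  - apply sumN_le. intros i _. apply Rmult_le_compat_l; [apply esym_nonneg | apply pow_incr; lra].
Qed.

Lemma xtail_le_xprod k d n : 0 <= d -> d ^ S k * xtail k d n <= xprod d n.
Proof.
  intros hd. rewrite (xprod_split k d n).
  assert (0 <= sumN (fun i => esym i n * d ^ i) (S k)).
  { apply sumN_nonneg. intros. apply Rmult_le_pos; [apply esym_nonneg | apply pow_le; lra]. }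
  lra.
Qed.

Lemma esym_le_xprod i d n : 0 <= d -> esym i n * d ^ i <= xprod d n.
Proof.
  intros hd. rewrite (xprod_esym d n (S (i + n))) by lia.
  apply (sumN_term_le (fun i => esym i n * d ^ i)); [| lia].
  intros. apply Rmult_le_pos; [apply esym_nonneg | apply pow_le; lra].
Qed.

Lemma inv_pow_le a s p : 1 <= s -> 3/4 * s <= a -> (2 <= p)%nat -> / a ^ p <= (4/3) ^ p * / s ^ 2.
Proof.
  intros hs ha hp. assert (0 < a) by lra. rewrite <- pow_inv.
  apply Rle_trans with ((4/3 * / s) ^ p).
  { apply pow_incr. split; [apply Rlt_le, Rinv_0_lt_compat; lra |].
    replace (4/3 * / s) with (/ (3/4 * s)) by (field; lra). apply Rinv_le_contravar; lra. }
  rewrite Rpow_mult_distr. apply Rmult_le_compat_l; [apply pow_le; lra |].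
  rewrite pow_inv. apply Rinv_le_contravar; [apply pow_lt; lra |].
  replace p with (2 + (p - 2))%nat by lia. rewrite pow_add.
  assert (1 <= s ^ (p - 2)) by (apply pow_R1_Rle; lra). assert (0 < s ^ 2) by (apply pow_lt; lra). nra.
Qed.

Lemma geom_expansion a x k : a <> 0 -> a - x <> 0 ->
  / (a - x) = sumN (fun i => x ^ i / a ^ S i) (S k) + x ^ S k / (a ^ S k * (a - x)).
Proof.
  intros h1 h2. induction k; [simpl; field; auto |].
  rewrite sumN_S, IHk. simpl pow. field. repeat split; auto. apply pow_nonzero; auto.
Qed.

Definition lhs_xcoef y i n := yprod y n * esym i n / INR (S n) ^ 2.
Definition rhs_xcoef y i n := rnum y n / ym y (S n) ^ S (S i).
Definition lhs_xrem k y x n := yprod y n * xtail k x n / INR (S n) ^ 2.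
Definition rhs_xrem k y x n := rnum y n / (ym y (S n) ^ S (S k) * (ym y (S n) - x)).

Section XExpansion.

Variable y : R.
Hypothesis Hy : 0 <= y <= 1/4.


Lemma lhs_xcoef_le i n : 0 <= lhs_xcoef y i n <= phi (1/4) y 0 n / (1/4) ^ i.
Proof.
  unfold lhs_xcoef, phi. rewrite rprod0_split by (auto || lra).
  pose proof (yprod_pos y n Hy). pose proof (INR_S_pos n).
  pose proof (esym_nonneg i n). pose proof (esym_le_xprod i (1/4) n ltac:(lra)).
  assert (0 < (1/4) ^ i) by (apply pow_lt; lra). assert (0 < INR (S n) ^ 2) by (apply pow_lt; lra).
  split; [apply Rdiv_le_0_compat; nra |].
  apply Rmult_le_reg_r with ((1/4) ^ i * INR (S n) ^ 2); [nra |].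
  replace (yprod y n * esym i n / INR (S n) ^ 2 * ((1 / 4) ^ i * INR (S n) ^ 2))
    with (yprod y n * (esym i n * (1/4) ^ i)) by (field; lra).
  replace (xprod (1 / 4) n * yprod y n / INR (S n) ^ 2 / (1 / 4) ^ i * ((1 / 4) ^ i * INR (S n) ^ 2))
    with (yprod y n * xprod (1/4) n) by (field; lra).
  apply Rmult_le_compat_l; lra.
Qed.

Lemma ex_series_phi_quarter : ex_series (phi (1/4) y 0).
Proof. apply ex_series_phi; lra. Qed.

Lemma ex_series_lhs_xcoef i : ex_series (lhs_xcoef y i).
Proof.
  apply (ex_series_Rabs_le _ (fun n => phi (1/4) y 0 n / (1/4) ^ i)).
  - intros n. pose proof (lhs_xcoef_le i n). rewrite Rabs_pos_eq; lra.
  - apply ex_series_divR, ex_series_phi_quarter.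
Qed.

Lemma rhs_xcoef_le i n : Rabs (rhs_xcoef y i n) <= (4/3) ^ S (S i) * hmaj n.
Proof.
  unfold rhs_xcoef, hmaj. pose proof (rnum_le y n Hy). pose proof (ym_ge y (S n) Hy ltac:(lia)).
  pose proof (INR_S_ge1 n). pose proof (inv_pow_le (ym y (S n)) (INR (S n)) (S (S i)) H1 H0 ltac:(lia)).
  unfold Rdiv. rewrite Rabs_mult, Rabs_inv, (Rabs_pos_eq (ym y (S n) ^ _)) by (apply pow_le; lra).
  assert (0 <= / ym y (S n) ^ S (S i)) by (apply Rlt_le, Rinv_0_lt_compat, pow_lt; lra).
  apply Rle_trans with ((1 + Hr 1 n) * ((4 / 3) ^ S (S i) * / INR (S n) ^ 2)).
  - apply Rmult_le_compat; auto using Rabs_pos.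
  - right. unfold Rdiv. ring.
Qed.

Lemma ex_series_rhs_xcoef i : ex_series (rhs_xcoef y i).
Proof.
  apply (ex_series_Rabs_le _ (fun n => (4/3) ^ S (S i) * hmaj n)).
  - apply rhs_xcoef_le.
  - apply ex_series_scalR, ex_series_hmaj.
Qed.

Lemma lhs_xrem_le k x n : 0 < x <= 1/4 ->
  Rabs (lhs_xrem k y x n) <= phi (1/4) y 0 n / (1/4) ^ S k.
Proof.
  intros hx. pose proof (yprod_pos y n Hy). pose proof (INR_S_pos n).
  pose proof (xtail_le k x (1/4) n ltac:(lra)) as [r1 r2]. pose proof (xtail_le_xprod k (1/4) n ltac:(lra)).
  unfold lhs_xrem, phi. rewrite rprod0_split by (auto || lra).
  assert (0 < (1/4) ^ S k) by (apply pow_lt; lra). assert (0 < INR (S n) ^ 2) by (apply pow_lt; lra).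
  rewrite Rabs_pos_eq by (apply Rdiv_le_0_compat; nra).
  apply Rmult_le_reg_r with ((1/4) ^ S k * INR (S n) ^ 2); [nra |].
  replace (yprod y n * xtail k x n / INR (S n) ^ 2 * ((1 / 4) ^ S k * INR (S n) ^ 2))
    with (yprod y n * ((1/4) ^ S k * xtail k x n)) by (field; lra).
  replace (xprod (1 / 4) n * yprod y n / INR (S n) ^ 2 / (1 / 4) ^ S k * ((1 / 4) ^ S k * INR (S n) ^ 2))
    with (yprod y n * xprod (1/4) n) by (field; lra).
  apply Rmult_le_compat_l; nra.
Qed.

Lemma rhs_xrem_le k x n : 0 < x <= 1/4 -> Rabs (rhs_xrem k y x n) <= 2 * ((4/3) ^ S (S k) * hmaj n).
Proof.
  intros hx. pose proof (rnum_le y n Hy). pose proof (ym_ge y (S n) Hy ltac:(lia)). pose proof (INR_S_ge1 n).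
  pose proof (inv_pow_le (ym y (S n)) (INR (S n)) (S (S k)) H1 H0 ltac:(lia)).
  assert (0 < ym y (S n) ^ S (S k)) by (apply pow_lt; lra).
  assert (/ (ym y (S n) - x) <= 2) by (replace 2 with (/ (1/2)) by field; apply Rinv_le_contravar; lra).
  assert (0 <= / (ym y (S n) - x)) by (apply Rlt_le, Rinv_0_lt_compat; lra).
  assert (0 <= / ym y (S n) ^ S (S k)) by (apply Rlt_le, Rinv_0_lt_compat; lra).
  unfold rhs_xrem, hmaj, Rdiv.
  rewrite Rabs_mult, Rabs_inv, Rabs_mult, (Rabs_pos_eq (ym y (S n) ^ _)), (Rabs_pos_eq (_ - x)), Rinv_mult
    by lra.
  apply Rle_trans with ((1 + Hr 1 n) * ((4 / 3) ^ S (S k) * / INR (S n) ^ 2 * 2)); [| right; unfold Rdiv; ring].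
  apply Rmult_le_compat; auto using Rabs_pos; [apply Rmult_le_pos; auto |].
  apply Rmult_le_compat; auto.
Qed.

Lemma lhs_x_expansion k x n : 0 <= x <= 1/4 ->
  phi x y 0 n = sumN (fun i => lhs_xcoef y i n * x ^ i) (S k) + x ^ S k * lhs_xrem k y x n.
Proof.
  intros hx. unfold phi, lhs_xrem. rewrite rprod0_split, (xprod_split k x n) by auto.
  pose proof (INR_S_pos n).
  rewrite (sumN_ext (fun i => lhs_xcoef y i n * x ^ i)
             (fun i => yprod y n / INR (S n) ^ 2 * (esym i n * x ^ i))) by (intros; unfold lhs_xcoef; field; lra).
  rewrite sumN_scal. field. lra.
Qed.

Lemma rhs_x_expansion k x n : 0 <= x <= 1/4 ->
  ukernel x y (S n) * rnum y n
  = sumN (fun i => rhs_xcoef y i n * x ^ i) (S k) + x ^ S k * rhs_xrem k y x n.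
Proof.
  intros hx. unfold ukernel, rhs_xrem. pose proof (ym_ge y (S n) Hy ltac:(lia)). pose proof (INR_S_ge1 n).
  assert (ha : ym y (S n) <> 0) by lra. assert (hb : ym y (S n) - x <> 0) by lra.
  rewrite Rinv_mult, (geom_expansion (ym y (S n)) x k ha hb).
  rewrite (sumN_ext (fun i => rhs_xcoef y i n * x ^ i)
             (fun i => rnum y n * / ym y (S n) * (x ^ i / ym y (S n) ^ S i))).
  2:{ intros i hi. unfold rhs_xcoef. simpl pow. field. split; auto. apply pow_nonzero; auto. }
  rewrite sumN_scal. simpl pow. field. repeat split; auto. apply pow_nonzero; auto.
Qed.

Theorem Series_lhs_rhs_xcoef k : Series (lhs_xcoef y k) = Series (rhs_xcoef y k).
Proof.
  apply (Series_coefs_unique k (1/4) (lhs_xcoef y) (rhs_xcoef y) (lhs_xrem k y) (rhs_xrem k y)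
    (fun n => phi (1/4) y 0 n / (1/4) ^ S k) (fun n => 2 * ((4/3) ^ S (S k) * hmaj n))); auto; try lra.
  - intros; apply ex_series_lhs_xcoef.
  - intros; apply ex_series_rhs_xcoef.
  - apply ex_series_divR, ex_series_phi_quarter.
  - apply ex_series_scalR, ex_series_scalR, ex_series_hmaj.
  - intros; now apply lhs_xrem_le.
  - intros; now apply rhs_xrem_le.
  - intros x hx. exists (Phi x y 0). split.
    + apply (is_series_extR (phi x y 0)); [intros; apply lhs_x_expansion; lra |].
      apply Series_correct, ex_series_phi; lra.
    + apply (is_series_extR (fun n => ukernel x y (S n) * rnum y n)); [intros; apply rhs_x_expansion; lra |].
      apply generating_identity; lra.
Qed.

End XExpansion.

(** * Coefficients of x^k y and x^k y^2 *)

(* The complete homogeneous symmetric function h_2(1, 1/2, ..., 1/n): the coefficient of y^2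
   in yprod y n. *)
Definition h2 (n : nat) := (Hr 1 n ^ 2 + Hr 2 n) / 2.

Lemma h2_nonneg n : 0 <= h2 n.
Proof. unfold h2. pose proof (Hr_nonneg 2 n). pose proof (pow2_ge_0 (Hr 1 n)). lra. Qed.

Fixpoint yprod_rem (y : R) (n : nat) : R :=
  match n with
  | O => 0
  | S n' => INR (S n') / (INR (S n') - y) *
      (yprod_rem y n' + / INR (S n') ^ 3 + Hr 1 n' / INR (S n') ^ 2 + h2 n' / INR (S n'))
  end.

Lemma yprod_rem_S y n : yprod_rem y (S n) = INR (S n) / (INR (S n) - y) *
  (yprod_rem y n + / INR (S n) ^ 3 + Hr 1 n / INR (S n) ^ 2 + h2 n / INR (S n)).
Proof. reflexivity. Qed.

Lemma yprod_expansion y n : 0 <= y <= 1/4 ->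
  yprod y n = 1 + y * Hr 1 n + y ^ 2 * h2 n + y ^ 3 * yprod_rem y n.
Proof.
  intros hy. induction n; [unfold h2; simpl; field |].
  rewrite yprod_S, yprod_rem_S, IHn. unfold h2. rewrite !Hr_S.
  pose proof (INR_S_ge1 n). field. lra.
Qed.

Lemma yprod_rem_le y n : 0 <= y <= 1/4 -> 0 <= yprod_rem y n <= yprod_rem (1/4) n.
Proof.
  intros hy. induction n; [simpl; lra |]. rewrite !yprod_rem_S.
  pose proof (INR_S_ge1 n). pose proof (Hr_nonneg 1 n). pose proof (h2_nonneg n).
  set (s := INR (S n)) in *.
  assert (0 <= / s ^ 3) by (apply Rlt_le, Rinv_0_lt_compat, pow_lt; lra).
  assert (0 <= Hr 1 n / s ^ 2) by (apply Rdiv_le_0_compat; [lra | apply pow_lt; lra]).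
  assert (0 <= h2 n / s) by (apply Rdiv_le_0_compat; lra).
  assert (0 <= s / (s - y)) by (apply Rdiv_le_0_compat; lra).
  assert (s / (s - y) <= s / (s - 1/4)) by (apply Rmult_le_compat_l; [lra | apply Rinv_le_contravar; lra]).
  split; [apply Rmult_le_pos | apply Rmult_le_compat]; lra.
Qed.

Definition lhs_coef (k i n : nat) : R :=
  match i with
  | O => esym k n / INR (S n) ^ 2
  | 1%nat => esym k n * Hr 1 n / INR (S n) ^ 2
  | _ => esym k n * h2 n / INR (S n) ^ 2
  end.

Definition lhs_yrem k y n := esym k n * yprod_rem y n / INR (S n) ^ 2.

Lemma lhs_xcoef_y_expansion k y n : 0 <= y <= 1/4 ->
  lhs_xcoef y k n = sumN (fun i => lhs_coef k i n * y ^ i) 3 + y ^ 3 * lhs_yrem k y n.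
Proof.
  intros hy. unfold lhs_xcoef, lhs_yrem. rewrite yprod_expansion by auto. cbn [sumN lhs_coef].
  pose proof (INR_S_pos n). field. lra.
Qed.

Lemma scaled_esym_le k n c : 0 <= c <= 64 * yprod (1/4) n ->
  Rabs (c * (esym k n / INR (S n) ^ 2)) <= 64 * lhs_xcoef (1/4) k n.
Proof.
  intros hc. pose proof (esym_nonneg k n).
  assert (0 <= esym k n / INR (S n) ^ 2) by (apply Rdiv_le_0_compat; [lra | apply pow_lt, INR_S_pos]).
  replace (64 * lhs_xcoef (1 / 4) k n) with ((64 * yprod (1/4) n) * (esym k n / INR (S n) ^ 2))
    by (unfold lhs_xcoef, Rdiv; ring).
  rewrite Rabs_pos_eq by (apply Rmult_le_pos; lra).
  apply Rmult_le_compat_r; lra.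
Qed.

(* At y = 1/4 the four terms of the expansion of yprod are nonnegative, with coefficients at least
   1/64. *)
Lemma yprod_quarter_terms_le n :
  1 <= 64 * yprod (1/4) n /\ Hr 1 n <= 64 * yprod (1/4) n /\ h2 n <= 64 * yprod (1/4) n /\
  yprod_rem (1/4) n <= 64 * yprod (1/4) n.
Proof.
  rewrite yprod_expansion by lra. pose proof (yprod_rem_le (1/4) n ltac:(lra)).
  pose proof (Hr_nonneg 1 n). pose proof (h2_nonneg n). simpl. lra.
Qed.

Lemma lhs_coef_le k i n : Rabs (lhs_coef k i n) <= 64 * lhs_xcoef (1/4) k n.
Proof.
  pose proof (yprod_quarter_terms_le n). pose proof (Hr_nonneg 1 n). pose proof (h2_nonneg n).
  destruct i as [| [| i]]; unfold lhs_coef.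
  - replace (esym k n / INR (S n) ^ 2) with (1 * (esym k n / INR (S n) ^ 2)) by ring.
    apply scaled_esym_le. lra.
  - replace (esym k n * Hr 1 n / INR (S n) ^ 2) with (Hr 1 n * (esym k n / INR (S n) ^ 2)) by (unfold Rdiv; ring).
    apply scaled_esym_le. lra.
  - replace (esym k n * h2 n / INR (S n) ^ 2) with (h2 n * (esym k n / INR (S n) ^ 2)) by (unfold Rdiv; ring).
    apply scaled_esym_le. lra.
Qed.

Lemma lhs_yrem_le k y n : 0 <= y <= 1/4 -> Rabs (lhs_yrem k y n) <= 64 * lhs_xcoef (1/4) k n.
Proof.
  intros hy. pose proof (yprod_quarter_terms_le n). pose proof (yprod_rem_le y n hy).
  replace (lhs_yrem k y n) with (yprod_rem y n * (esym k n / INR (S n) ^ 2)) by (unfold lhs_yrem, Rdiv; ring).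
  apply scaled_esym_le. lra.
Qed.

Lemma ex_series_lhs_xcoef_quarter_64 k : ex_series (fun n => 64 * lhs_xcoef (1/4) k n).
Proof. apply ex_series_scalR, ex_series_lhs_xcoef; lra. Qed.

Lemma ex_series_lhs_coef k i : ex_series (lhs_coef k i).
Proof.
  apply (ex_series_Rabs_le _ _ (lhs_coef_le k i)), ex_series_lhs_xcoef_quarter_64.
Qed.

Fixpoint tri (p : nat) : R := match p with O => 0 | S p' => tri p' + INR (S p') end.

Fixpoint binom_rem (p : nat) (z : R) : R :=
  match p with O => 0 | S p' => (tri (S p') + binom_rem p' z) / (1 - z) end.

Fixpoint binom_rem_bound (p : nat) : R :=
  match p with O => 0 | S p' => 4/3 * (tri (S p') + binom_rem_bound p') end.

Lemma tri_S p : tri (S p) = tri p + INR (S p).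
Proof. reflexivity. Qed.

Lemma tri_nonneg p : 0 <= tri p.
Proof. induction p; [simpl; lra |]. rewrite tri_S. pose proof (pos_INR (S p)). lra. Qed.

Lemma tri_val p : tri p = INR p * (INR p + 1) / 2.
Proof. induction p; [simpl; field |]. rewrite tri_S, IHp, S_INR. field. Qed.

Lemma binom_expansion p z : z <> 1 -> / (1 - z) ^ p = 1 + INR p * z + tri p * z ^ 2 + z ^ 3 * binom_rem p z.
Proof.
  intros hz. induction p; [simpl; field |].
  change ((1 - z) ^ S p) with ((1 - z) * (1 - z) ^ p). rewrite Rinv_mult, IHp.
  change (binom_rem (S p) z) with ((tri (S p) + binom_rem p z) / (1 - z)).
  rewrite tri_S, S_INR. field. lra.
Qed.

Lemma binom_rem_le p z : 0 <= z <= 1/4 -> 0 <= binom_rem p z <= binom_rem_bound p.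
Proof.
  intros hz. induction p; [simpl; lra |].
  change (binom_rem (S p) z) with ((tri (S p) + binom_rem p z) / (1 - z)).
  change (binom_rem_bound (S p)) with (4/3 * (tri (S p) + binom_rem_bound p)).
  pose proof (tri_nonneg (S p)).
  assert (0 < / (1 - z) <= 4/3).
  { split; [apply Rinv_0_lt_compat; lra |]. replace (4/3) with (/ (3/4)) by field. apply Rinv_le_contravar; lra. }
  unfold Rdiv. split; [apply Rmult_le_pos; lra |]. rewrite Rmult_comm. apply Rmult_le_compat; lra.
Qed.

Definition Qsum_rem (y : R) (n : nat) := sumN (fun t => / (INR (S t) ^ 2 * (INR (S t) - y))) n.

Lemma Qsum_expansion y n : 0 <= y <= 1/4 -> Qsum y n = Hr 1 n + y * Hr 2 n + y ^ 2 * Qsum_rem y n.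
Proof.
  intros hy. unfold Qsum, Qsum_rem. rewrite !Hr_sumN, <- !sumN_scal, <- !sumN_plus.
  apply sumN_ext. intros i _. unfold ym. pose proof (INR_S_ge1 i). field. lra.
Qed.

Lemma Qsum_rem_le y n : 0 <= y <= 1/4 -> 0 <= Qsum_rem y n <= 8/3.
Proof.
  intros hy. unfold Qsum_rem. split.
  - apply sumN_nonneg. intros i _. pose proof (INR_S_ge1 i).
    apply Rlt_le, Rinv_0_lt_compat, Rmult_lt_0_compat; [apply pow_lt |]; lra.
  - apply Rle_trans with (sumN (fun t => 4/3 * / INR (S t) ^ 2) n).
    + apply sumN_le. intros i _. pose proof (INR_S_ge1 i).
      assert (0 < INR (S i) ^ 2) by (apply pow_lt; lra).
      rewrite Rinv_mult, Rmult_comm. apply Rmult_le_compat_r; [apply Rlt_le, Rinv_0_lt_compat; lra |].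
      replace (4/3) with (/ (3/4)) by field. apply Rinv_le_contravar; lra.
    + rewrite sumN_scal, <- Hr_sumN. pose proof (H2_le2 n). lra.
Qed.

Definition zeta_term (q n : nat) := / INR (S n) ^ q.
Definition zeta2_term (q r n : nat) := / INR (S n) ^ q * Hr r n.

Lemma zeta_term_le_inv_sq q n : (2 <= q)%nat -> 0 <= zeta_term q n <= / INR (S n) ^ 2.
Proof.
  intros hq. unfold zeta_term. pose proof (INR_S_ge1 n). split; [apply Rlt_le, inv_INR_S_pow_pos |].
  apply Rinv_le_contravar; [apply pow_lt; lra | apply Rle_pow; auto].
Qed.

Lemma ex_series_zeta q : (2 <= q)%nat -> ex_series (zeta_term q).
Proof.
  intros hq. apply (ex_series_Rabs_le _ (fun n => / INR (S n) ^ 2)); [| exact ex_series_inv_sq].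
  intros n. destruct (zeta_term_le_inv_sq q n hq). rewrite Rabs_pos_eq; lra.
Qed.

Lemma ex_series_zeta2_1 q : (2 <= q)%nat -> ex_series (zeta2_term q 1).
Proof.
  intros hq. apply (ex_series_Rabs_le _ hmaj); [| exact ex_series_hmaj].
  intros n. unfold zeta2_term, hmaj. destruct (zeta_term_le_inv_sq q n hq). pose proof (Hr_nonneg 1 n).
  unfold zeta_term in *. rewrite Rabs_pos_eq by (apply Rmult_le_pos; lra).
  unfold Rdiv. rewrite Rmult_comm. apply Rmult_le_compat; lra.
Qed.

Lemma ex_series_zeta2_2 q : (2 <= q)%nat -> ex_series (zeta2_term q 2).
Proof.
  intros hq. apply (ex_series_Rabs_le _ (fun n => 2 * / INR (S n) ^ 2)); [| exact ex_series_inv_sq_2].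
  intros n. unfold zeta2_term. destruct (zeta_term_le_inv_sq q n hq). pose proof (Hr_nonneg 2 n).
  pose proof (H2_le2 n). unfold zeta_term in *. rewrite Rabs_pos_eq by (apply Rmult_le_pos; lra).
  rewrite Rmult_comm. apply Rmult_le_compat; lra.
Qed.

(* The coefficient of y^i in rhs_xcoef y k n = rnum y n / (n + 1 - y)^p, where p = k + 2. *)
Definition rhs_coef (k i n : nat) : R :=
  let p := S (S k) in
  match i with
  | O => zeta_term p n
  | 1%nat => INR p * zeta_term (S p) n - zeta2_term p 1 n
  | _ => tri p * zeta_term (S (S p)) n - INR p * zeta2_term (S p) 1 n - zeta2_term p 2 n
  end.

Lemma ex_series_rhs_coef k i : ex_series (rhs_coef k i).
Proof.
  destruct i as [| [| i]]; unfold rhs_coef; [apply ex_series_zeta; lia | |].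
  - apply (ex_series_minus (fun n => INR (S (S k)) * zeta_term (S (S (S k))) n) (zeta2_term (S (S k)) 1)).
    + apply ex_series_scalR, ex_series_zeta; lia.
    + apply ex_series_zeta2_1; lia.
  - apply (ex_series_minus (fun n => tri (S (S k)) * zeta_term (S (S (S (S k)))) n
                               - INR (S (S k)) * zeta2_term (S (S (S k))) 1 n) (zeta2_term (S (S k)) 2)).
    + apply (ex_series_minus (fun n => tri (S (S k)) * zeta_term (S (S (S (S k)))) n)
                             (fun n => INR (S (S k)) * zeta2_term (S (S (S k))) 1 n)).
      * apply ex_series_scalR, ex_series_zeta; lia.
      * apply ex_series_scalR, ex_series_zeta2_1; lia.
    + apply ex_series_zeta2_2; lia.
Qed.

Definition rhs_yrem_num (k : nat) (y : R) (n : nat) : R :=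
  let p := S (S k) in
  let s := INR (S n) in
  let a1 := INR p / s in
  let a2 := tri p / s ^ 2 in
  let a3 := binom_rem p (y / s) / s ^ 3 in
  - (a2 * Hr 1 n) - a1 * Hr 2 n - y * a2 * Hr 2 n + a3 * rnum y n
  - Qsum_rem y n * (1 + a1 * y + a2 * y ^ 2).

Definition rhs_yrem k y n := rhs_yrem_num k y n / INR (S n) ^ S (S k).

Lemma rhs_xcoef_y_expansion k y n : 0 <= y <= 1/4 ->
  rhs_xcoef y k n = sumN (fun i => rhs_coef k i n * y ^ i) 3 + y ^ 3 * rhs_yrem k y n.
Proof.
  intros hy. unfold rhs_xcoef, rhs_yrem, rhs_yrem_num. cbn [sumN rhs_coef]. unfold zeta_term, zeta2_term.
  set (p := S (S k)). set (s := INR (S n)).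
  assert (hs : 1 <= s) by apply INR_S_ge1.
  change (s ^ S p) with (s * s ^ p). change (s ^ S (S p)) with (s * (s * s ^ p)).
  replace (ym y (S n)) with (s * (1 - y / s)) by (unfold ym; fold s; field; lra).
  rewrite Rpow_mult_distr.
  assert (hz : y / s <= 1/4).
  { apply Rle_trans with (y / 1); [apply Rmult_le_compat_l, Rinv_le_contravar |]; lra. }
  replace (rnum y n / (s ^ p * (1 - y / s) ^ p)) with (rnum y n * / s ^ p * / (1 - y / s) ^ p)
    by (field; split; apply pow_nonzero; lra).
  rewrite binom_expansion by lra.
  unfold rnum. rewrite Qsum_expansion by auto.
  assert (0 < s ^ p) by (apply pow_lt; lra).
  field. lra.
Qed.

Definition yrem_const0 k :=
  let p := S (S k) in 2 * INR p + 2 * tri p + binom_rem_bound p + 8/3 * (1 + INR p + tri p).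
Definition yrem_const1 k := let p := S (S k) in tri p + binom_rem_bound p.

Lemma binom_rem_bound_nonneg p : 0 <= binom_rem_bound p.
Proof. pose proof (binom_rem_le p 0 ltac:(lra)). lra. Qed.

Lemma div_pow_le a s q : 0 <= a -> 1 <= s -> 0 <= a / s ^ q <= a.
Proof.
  intros ha hs. assert (1 <= s ^ q) by (apply pow_R1_Rle; lra).
  split; [apply Rdiv_le_0_compat; lra |].
  apply Rmult_le_reg_r with (s ^ q); [lra |].
  unfold Rdiv. rewrite Rmult_assoc, Rinv_l, Rmult_1_r by lra. nra.
Qed.

Lemma rhs_yrem_num_le k y n : 0 <= y <= 1/4 ->
  Rabs (rhs_yrem_num k y n) <= yrem_const0 k + yrem_const1 k * Hr 1 n.
Proof.
  intros hy. unfold rhs_yrem_num, yrem_const0, yrem_const1.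
  set (p := S (S k)). set (s := INR (S n)). assert (hs : 1 <= s) by apply INR_S_ge1.
  pose proof (tri_nonneg p). pose proof (binom_rem_bound_nonneg p). pose proof (pos_INR p).
  pose proof (Hr_nonneg 1 n). pose proof (Hr_nonneg 2 n). pose proof (H2_le2 n).
  pose proof (Qsum_rem_le y n hy). pose proof (rnum_le y n hy) as hV.
  assert (hz : 0 <= y / s <= 1/4).
  { split; [apply Rdiv_le_0_compat; lra |].
    apply Rle_trans with (y / 1); [apply Rmult_le_compat_l, Rinv_le_contravar |]; lra. }
  pose proof (binom_rem_le p (y / s) hz).
  pose proof (div_pow_le (INR p) s 1 ltac:(lra) hs) as a1b. rewrite pow_1 in a1b.
  pose proof (div_pow_le (tri p) s 2 ltac:(lra) hs) as a2b.
  assert (a3b : 0 <= binom_rem p (y / s) / s ^ 3 <= binom_rem_bound p).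
  { pose proof (div_pow_le (binom_rem p (y / s)) s 3 ltac:(lra) hs). lra. }
  set (u1 := Hr 1 n) in *. set (u2 := Hr 2 n) in *. set (th := Qsum_rem y n) in *. set (V := rnum y n) in *.
  set (a1 := INR p / s) in *. set (a2 := tri p / s ^ 2) in *. set (a3 := binom_rem p (y / s) / s ^ 3) in *.
  assert (P1 : 0 <= a2 * u1 <= tri p * u1) by (split; nra).
  assert (P2 : 0 <= a1 * u2 <= INR p * 2) by (split; nra).
  assert (P3 : 0 <= y * a2 * u2 <= tri p * 2).
  { assert (0 <= y * a2 <= tri p) by (split; nra). split; nra. }
  assert (P4 : Rabs (a3 * V) <= binom_rem_bound p * (1 + u1)).
  { rewrite Rabs_mult, Rabs_pos_eq by lra. apply Rmult_le_compat; auto using Rabs_pos; lra. }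
  assert (P5 : 0 <= th * (1 + a1 * y + a2 * y ^ 2) <= 8/3 * (1 + INR p + tri p)).
  { assert (0 <= a1 * y <= INR p) by (split; nra). assert (0 <= y ^ 2 <= 1) by (simpl; split; nra).
    assert (0 <= a2 * y ^ 2 <= tri p) by (split; nra). split; nra. }
  apply Rabs_le_between in P4. apply Rabs_le. split; lra.
Qed.

Lemma rhs_yrem_le k y n : 0 <= y <= 1/4 -> Rabs (rhs_yrem k y n) <= (yrem_const0 k + yrem_const1 k) * hmaj n.
Proof.
  intros hy. pose proof (rhs_yrem_num_le k y n hy) as HN. unfold rhs_yrem, hmaj.
  set (s := INR (S n)). assert (hs : 1 <= s) by apply INR_S_ge1.
  assert (0 <= yrem_const0 k).
  { unfold yrem_const0. pose proof (tri_nonneg (S (S k))). pose proof (binom_rem_bound_nonneg (S (S k))).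
    pose proof (pos_INR (S (S k))). lra. }
  assert (0 <= yrem_const1 k).
  { unfold yrem_const1. pose proof (tri_nonneg (S (S k))). pose proof (binom_rem_bound_nonneg (S (S k))). lra. }
  pose proof (Hr_nonneg 1 n). assert (0 < s ^ 2) by (apply pow_lt; lra).
  assert (s ^ 2 <= s ^ S (S k)) by (apply Rle_pow; [lra | lia]).
  unfold Rdiv. rewrite Rabs_mult, Rabs_inv, (Rabs_pos_eq (s ^ _)) by lra.
  apply Rle_trans with ((yrem_const0 k + yrem_const1 k * Hr 1 n) * / s ^ 2).
  - apply Rmult_le_compat; auto using Rabs_pos; [apply Rlt_le, Rinv_0_lt_compat; lra |].
    apply Rinv_le_contravar; lra.
  - assert (0 <= / s ^ 2) by (apply Rlt_le, Rinv_0_lt_compat; lra).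
    replace ((yrem_const0 k + yrem_const1 k) * ((1 + Hr 1 n) * / s ^ 2))
      with ((yrem_const0 k + yrem_const1 k * Hr 1 n) * / s ^ 2
            + (yrem_const1 k + yrem_const0 k * Hr 1 n) * / s ^ 2) by ring.
    assert (0 <= (yrem_const1 k + yrem_const0 k * Hr 1 n) * / s ^ 2) by (apply Rmult_le_pos; nra).
    lra.
Qed.

Theorem Series_lhs_rhs_coef k :
  Series (lhs_coef k 1) = Series (rhs_coef k 1) /\ Series (lhs_coef k 2) = Series (rhs_coef k 2).
Proof.
  assert (H := Series_coefs_unique 2 (1/4) (lhs_coef k) (rhs_coef k) (lhs_yrem k) (rhs_yrem k)
    (fun n => 64 * lhs_xcoef (1/4) k n) (fun n => (yrem_const0 k + yrem_const1 k) * hmaj n)).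
  split; apply H; try lra; try lia; clear H.
  all: try (intros; apply ex_series_lhs_coef); try (intros; apply ex_series_rhs_coef).
  all: try (apply ex_series_lhs_xcoef_quarter_64); try (apply ex_series_scalR, ex_series_hmaj).
  all: try (intros y n hy; apply lhs_yrem_le; lra); try (intros y n hy; apply rhs_yrem_le; lra).
  all: intros y hy; exists (Series (lhs_xcoef y k)); split;
    [ apply (is_series_extR (lhs_xcoef y k)); [intros n; apply lhs_xcoef_y_expansion; lra |];
      apply Series_correct, ex_series_lhs_xcoef; lra
    | rewrite Series_lhs_rhs_xcoef by lra;
      apply (is_series_extR (rhs_xcoef y k)); [intros n; apply rhs_xcoef_y_expansion; lra |];
      apply Series_correct, ex_series_rhs_xcoef; lra ].
Qed.

Lemma binomial_2_tri k : C (k + 3) 2 = tri (S (S k)).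
Proof.
  rewrite tri_val. unfold C. replace (k + 3 - 2)%nat with (k + 1)%nat by lia.
  replace (k + 3)%nat with (S (S (k + 1))) by lia.
  rewrite !fact_simpl, !mult_INR, !S_INR, plus_INR. pose proof (INR_fact_neq_0 (k + 1)).
  change (INR 1) with 1. change (INR 0) with 0. change (INR (fact 0)) with 1. field. auto.
Qed.

Lemma is_zeta1_Series q : (2 <= q)%nat -> is_zeta1 q (Series (zeta_term q)).
Proof. intros hq. apply is_series_Reals, Series_correct, ex_series_zeta, hq. Qed.

Lemma is_zeta2_Series q r : ex_series (zeta2_term q r) -> is_zeta2 q r (Series (zeta2_term q r)).
Proof. intros H. apply is_series_Reals, Series_correct, H. Qed.

Lemma Series_rhs_coef_1 k :
  Series (rhs_coef k 1) = INR (k + 2) * Series (zeta_term (k + 3)) - Series (zeta2_term (k + 2) 1).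
Proof.
  replace (k + 2)%nat with (S (S k)) by lia. replace (k + 3)%nat with (S (S (S k))) by lia.
  apply is_series_unique, is_series_minusR; [apply is_series_scalR |];
    apply Series_correct; [apply ex_series_zeta | apply ex_series_zeta2_1]; lia.
Qed.

Lemma Series_rhs_coef_2 k :
  Series (rhs_coef k 2) = C (k + 3) 2 * Series (zeta_term (k + 4))
    - INR (k + 2) * Series (zeta2_term (k + 3) 1) - Series (zeta2_term (k + 2) 2).
Proof.
  rewrite binomial_2_tri. replace (k + 2)%nat with (S (S k)) by lia.
  replace (k + 3)%nat with (S (S (S k))) by lia. replace (k + 4)%nat with (S (S (S (S k)))) by lia.
  apply is_series_unique, is_series_minusR; [apply is_series_minusR; apply is_series_scalR |];
    apply Series_correct; [apply ex_series_zeta | apply ex_series_zeta2_1 | apply ex_series_zeta2_2]; lia.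
Qed.

Lemma is_series_lhs_coef_shift k i : (1 <= i)%nat ->
  is_series (fun m => lhs_coef k i (S m)) (Series (lhs_coef k i)).
Proof.
  intros hi. apply is_series_drop0, Series_correct, ex_series_lhs_coef.
  destruct i as [| [| i]]; [lia | |]; unfold lhs_coef, h2; simpl Hr; unfold Rdiv; ring.
Qed.

Theorem mainTheorem19 (k : nat) (hk : (1 <= k)%nat) :
  exists z3 z21 z4 z31 z22 : R,
    is_zeta1 (k + 3) z3 /\ is_zeta2 (k + 2) 1 z21 /\
    is_zeta1 (k + 4) z4 /\ is_zeta2 (k + 3) 1 z31 /\ is_zeta2 (k + 2) 2 z22 /\
    infinite_sum
      (fun m => let n := S m in
         Hr 1 n * P k (fun i => Hr i n) / (INR (S n)) ^ 2)
      (INR (k + 2) * z3 - z21) /\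
    infinite_sum
      (fun m => let n := S m in
         / 2 * ((Hr 1 n ^ 2 + Hr 2 n) * P k (fun i => Hr i n)) / (INR (S n)) ^ 2)
      (C (k + 3) 2 * z4 - INR (k + 2) * z31 - z22).
Proof.
  destruct (Series_lhs_rhs_coef k) as [E1 E2].
  exists (Series (zeta_term (k + 3))), (Series (zeta2_term (k + 2) 1)), (Series (zeta_term (k + 4))),
    (Series (zeta2_term (k + 3) 1)), (Series (zeta2_term (k + 2) 2)).
  repeat split.
  - apply is_zeta1_Series; lia.
  - apply is_zeta2_Series, ex_series_zeta2_1; lia.
  - apply is_zeta1_Series; lia.
  - apply is_zeta2_Series, ex_series_zeta2_1; lia.
  - apply is_zeta2_Series, ex_series_zeta2_2; lia.
  - apply is_series_Reals. rewrite <- Series_rhs_coef_1, <- E1.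
    apply (is_series_extR (fun m => lhs_coef k 1 (S m))); [| apply is_series_lhs_coef_shift; lia].
    intros m. unfold lhs_coef. rewrite P_harmonic_esym. unfold Rdiv. ring.
  - apply is_series_Reals. rewrite <- Series_rhs_coef_2, <- E2.
    apply (is_series_extR (fun m => lhs_coef k 2 (S m))); [| apply is_series_lhs_coef_shift; lia].
    intros m. unfold lhs_coef, h2. rewrite P_harmonic_esym. unfold Rdiv. ring.
Qed.
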